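(* For every simplicial set $X$, the canonical simplicial map $\mathrm{ESd}\,X\to\mathrm{ESd}'X$ is inner anodyne.
   Context: Work classically. $\Delta$ is the simplex category of finite ordinals $[n]$, $n\ge0$. $\mathrm{ESd}\colon\mathrm{sSet}\to\mathrm{sSet}$ is precomposition with the functor $\Delta\to\Delta$, $[n]\mapsto[n]\star[n]=[2n+1]$, $\alpha\mapsto\alpha\star\alpha$; so $(\mathrm{ESd}\,X)_n=X_{2n+1}$. $\mathrm{ESd}'\colon\mathrm{sSet}\to\mathrm{sSet}$ is the left Kan extension along the Yoneda embedding $\Delta\to\mathrm{sSet}$ of $[n]\mapsto N(\mathrm{Fun}([1],[n]))$, the nerve of the poset of pairs $(a\le b)$ in $[n]$ with the product order. The canonical map is the unique colimit-compatible natural transformation which on $X=\Delta^n$ sends a $k$-simplex $f\colon[2k+1]\to[n]$ of $\mathrm{ESd}\,\Delta^n$ to the $k$-simplex $i\mapsto(f(i),f(k+1+i))$ of $N(\mathrm{Fun}([1],[n]))$ (natural in $[n]$). A map of simplicial sets is inner anodyne if it has the left lifting property against all inner fibrations (maps with the right lifting property against the inner horn inclusions $\Lambda^n_k\hookrightarrow\Delta^n$, $0<k<n$). *)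

From Stdlib Require Import Relations PropExtensionality FunctionalExtensionality
  ProofIrrelevance ClassicalEpsilon.
From mathcomp Require Import all_boot.
From mathcomp Require Import zify.

Set Implicit Arguments.
Unset Strict Implicit.
Unset Printing Implicit Defensive.

(* The simplex category Δ: objects [n] = {0,...,n} (encoded by n : nat), *)

Definition monob (m n : nat) (f : {ffun 'I_m.+1 -> 'I_n.+1}) : bool :=
  [forall i : 'I_m.+1, forall j : 'I_m.+1, (i <= j) ==> (f i <= f j)].

Definition Dmor (m n : nat) := {f : {ffun 'I_m.+1 -> 'I_n.+1} | monob f}.

Lemma monoP (m n : nat) (f : {ffun 'I_m.+1 -> 'I_n.+1}) :
  monob f -> forall i j : 'I_m.+1, i <= j -> f i <= f j.
Proof. by move=> /forallP H i j ij; exact: (implyP (forallP (H i) j) ij). Qed.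

Lemma Did_mono (n : nat) : monob [ffun i : 'I_n.+1 => i].
Proof. by apply/forallP=> i; apply/forallP=> j; rewrite !ffunE; apply/implyP. Qed.

Definition Did (n : nat) : Dmor n n := exist (fun f => monob f) _ (Did_mono n).

Lemma Dcomp_mono (m n p : nat) (g : Dmor n p) (f : Dmor m n) :
  monob [ffun i => sval g (sval f i)].
Proof.
apply/forallP=> i; apply/forallP=> j; apply/implyP=> ij; rewrite !ffunE.
apply: (monoP (valP g)); exact: (monoP (valP f)).
Qed.

Definition Dcomp (m n p : nat) (g : Dmor n p) (f : Dmor m n) : Dmor m p :=
  exist (fun f => monob f) _ (Dcomp_mono g f).

Lemma Dcomp_idl (m n : nat) (f : Dmor m n) : Dcomp (Did n) f = f.
Proof. by apply: val_inj; apply/ffunP=> i; rewrite /= !ffunE. Qed.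

Lemma Dcomp_idr (m n : nat) (f : Dmor m n) : Dcomp f (Did m) = f.
Proof. by apply: val_inj; apply/ffunP=> i; rewrite /= !ffunE. Qed.

Lemma Dcomp_assoc (m n p q : nat) (h : Dmor p q) (g : Dmor n p) (f : Dmor m n) :
  Dcomp h (Dcomp g f) = Dcomp (Dcomp h g) f.
Proof. by apply: val_inj; apply/ffunP=> i; rewrite /= !ffunE. Qed.

Record SSet := {
  sob :> nat -> Type;
  sact : forall m n, Dmor m n -> sob n -> sob m;
  sact_id : forall n (x : sob n), sact (Did n) x = x;
  sact_comp : forall m n p (f : Dmor m n) (g : Dmor n p) (x : sob p),
      sact (Dcomp g f) x = sact f (sact g x)
}.
Arguments sact s {m n} f x.

Record SMap (X Y : SSet) := {
  smap : forall n, X n -> Y n;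
  smap_nat : forall m n (f : Dmor m n) (x : X n),
      smap (sact X f x) = sact Y f (smap x)
}.
Arguments smap {X Y} s {n} x.

Definition Simplex (n : nat) : SSet :=
  {| sob := fun m => Dmor m n;
     sact := fun m k f g => Dcomp g f;
     sact_id := fun k x => Dcomp_idr x;
     sact_comp := fun m k p f g x => Dcomp_assoc x g f |}.

Definition hornb (n k m : nat) (f : Dmor m n) : bool :=
  [exists j : 'I_n.+1, (nat_of_ord j != k) && [forall i : 'I_m.+1, sval f i != j]].

Lemma hornb_comp (n k m p : nat) (g : Dmor m p) (f : Dmor p n) :
  hornb k f -> hornb k (Dcomp f g).
Proof.
move=> /existsP [j /andP [jk /forallP H]]; apply/existsP; exists j.
by rewrite jk /=; apply/forallP=> i; rewrite ffunE.
Qed.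

Definition horn_act (n k m p : nat) (g : Dmor m p)
    (f : {f : Dmor p n | hornb k f}) : {f : Dmor m n | hornb k f} :=
  exist (fun f => hornb k f) _ (hornb_comp g (valP f)).

Lemma horn_act_id (n k p : nat) (f : {f : Dmor p n | hornb k f}) :
  horn_act (Did p) f = f.
Proof. by apply: val_inj; rewrite /= Dcomp_idr. Qed.

Lemma horn_act_comp (n k m p q : nat) (f : Dmor m p) (g : Dmor p q)
    (x : {f : Dmor q n | hornb k f}) :
  horn_act (Dcomp g f) x = horn_act f (horn_act g x).
Proof. by apply: val_inj; rewrite /= Dcomp_assoc. Qed.

Definition Horn (n k : nat) : SSet :=
  {| sob := fun m => {f : Dmor m n | hornb k f};
     sact := fun m p g f => horn_act g f;
     sact_id := fun p x => horn_act_id x;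
     sact_comp := fun m p q f g x => horn_act_comp f g x |}.

Definition horn_incl (n k : nat) : SMap (Horn n k) (Simplex n) :=
  {| smap := fun m (f : Horn n k m) => (sval f : Simplex n m);
     smap_nat := fun m p g f => erefl |}.

Definition llp (A B X Y : SSet) (i : SMap A B) (p : SMap X Y) : Prop :=
  forall (u : SMap A X) (v : SMap B Y),
    (forall m (a : A m), smap p (smap u a) = smap v (smap i a)) ->
    exists h : SMap B X,
      (forall m (a : A m), smap h (smap i a) = smap u a) /\
      (forall m (b : B m), smap p (smap h b) = smap v b).

Definition inner_fibration (X Y : SSet) (p : SMap X Y) : Prop :=
  forall n k : nat, 0 < k -> k < n -> llp (horn_incl n k) p.

Definition inner_anodyne (A B : SSet) (i : SMap A B) : Prop :=
  forall (X Y : SSet) (p : SMap X Y), inner_fibration p -> llp i p.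

(* The join α ⋆ α : [m] ⋆ [m] = [2m+1] -> [2n+1] = [n] ⋆ [n].           *)

Definition joinn (m n : nat) (a : Dmor m n) (i : nat) : nat :=
  if i <= m then nat_of_ord (sval a (inord i)) else sval a (inord (i - m.+1)) + n.+1.

Lemma joinn_bound (m n : nat) (a : Dmor m n) (i : nat) : joinn a i <= (n + n).+1.
Proof.
rewrite /joinn; case: ifP => _; set j := sval a _; have := ltn_ord j; lia.
Qed.

Definition join_fun (m n : nat) (a : Dmor m n) : {ffun 'I_(m + m).+2 -> 'I_(n + n).+2} :=
  [ffun i : 'I_(m + m).+2 => inord (joinn a i)].

Lemma join_funE (m n : nat) (a : Dmor m n) (i : 'I_(m + m).+2) :
  nat_of_ord (join_fun a i) = joinn a i.
Proof. by rewrite ffunE inordK // ltnS joinn_bound. Qed.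

Lemma join_mono (m n : nat) (a : Dmor m n) : monob (join_fun a).
Proof.
apply/forallP=> i; apply/forallP=> j; apply/implyP=> ij.
rewrite !join_funE /joinn.
have Hi := ltn_ord i; have Hj := ltn_ord j.
case: ifP => im; case: ifP => jm.
- apply: (monoP (valP a)); rewrite !inordK; lia.
- set x := sval a _; have := ltn_ord x; lia.
- lia.
- rewrite leq_add2r; apply: (monoP (valP a)); rewrite !inordK; lia.
Qed.

Definition Djoin (m n : nat) (a : Dmor m n) : Dmor (m + m).+1 (n + n).+1 :=
  exist (fun f => monob f) _ (join_mono a).

Lemma Djoin_id (n : nat) : Djoin (Did n) = Did (n + n).+1.
Proof.
apply: val_inj; apply/ffunP=> i; apply: val_inj.
rewrite /= join_funE ffunE /joinn /=; have Hi := ltn_ord i.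
case: ifP => im; rewrite ffunE inordK; lia.
Qed.

Lemma Djoin_comp (m n p : nat) (g : Dmor n p) (f : Dmor m n) :
  Djoin (Dcomp g f) = Dcomp (Djoin g) (Djoin f).
Proof.
apply: val_inj; apply/ffunP=> i; apply: val_inj.
rewrite /= join_funE [in RHS]ffunE !join_funE /joinn /= !ffunE; have Hi := ltn_ord i.
case: ifP => im.
- set x := sval f _; have Hx := ltn_ord x.
  rewrite ifT; last by lia.
  by congr (nat_of_ord (sval g _)); apply: val_inj; rewrite /= inordK //; lia.
- set x := sval f _; have Hx := ltn_ord x.
  rewrite ifF; last by lia.
  by congr (nat_of_ord (sval g _) + _); apply: val_inj; rewrite /= inordK //; lia.
Qed.

(* ESd X : [n] |-> X_{2n+1}, α |-> α ⋆ α  (precomposition with [n] |-> [n] ⋆ [n]). *)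
Definition ESd (X : SSet) : SSet :=
  {| sob := fun n => X (n + n).+1;
     sact := fun m n a x => sact X (Djoin a) x;
     sact_id := fun n x => eq_ind_r (fun d => sact X d x = x) (sact_id x) (Djoin_id n);
     sact_comp := fun m n p f g x =>
       eq_ind_r (fun d => sact X d x = sact X (Djoin f) (sact X (Djoin g) x))
                (sact_comp (Djoin f) (Djoin g) x) (Djoin_comp g f) |}.

(* N(Fun([1],[n])): the nerve of the poset of pairs (a ≤ b) in [n] with  *)
(* the product order.  A k-simplex is a monotone map [k] -> Fun([1],[n]).*)

Definition nfunb (k n : nat) (s : {ffun 'I_k.+1 -> 'I_n.+1 * 'I_n.+1}) : bool :=
  [forall i : 'I_k.+1, (s i).1 <= (s i).2] &&
  [forall i : 'I_k.+1, forall j : 'I_k.+1,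
     (i <= j) ==> (((s i).1 <= (s j).1) && ((s i).2 <= (s j).2))].

Definition NFun (k n : nat) := {s : {ffun 'I_k.+1 -> 'I_n.+1 * 'I_n.+1} | nfunb s}.

Lemma nfun_act_ok (k' k n : nat) (b : Dmor k' k) (s : NFun k n) :
  nfunb [ffun i => sval s (sval b i)].
Proof.
case: s => s /= /andP [/forallP H1 /forallP H2]; apply/andP; split.
  by apply/forallP=> i; rewrite ffunE.
apply/forallP=> i; apply/forallP=> j; apply/implyP=> ij; rewrite !ffunE.
exact: (implyP (forallP (H2 _) _) (monoP (valP b) ij)).
Qed.

Definition nfun_act (k' k n : nat) (b : Dmor k' k) (s : NFun k n) : NFun k' n :=
  exist (fun s => nfunb s) _ (nfun_act_ok b s).

Lemma nfun_act_id (k n : nat) (s : NFun k n) : nfun_act (Did k) s = s.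
Proof. by apply: val_inj; apply/ffunP=> i; rewrite /= !ffunE. Qed.

Lemma nfun_act_comp (m k p n : nat) (f : Dmor m k) (g : Dmor k p) (s : NFun p n) :
  nfun_act (Dcomp g f) s = nfun_act f (nfun_act g s).
Proof. by apply: val_inj; apply/ffunP=> i; rewrite /= !ffunE. Qed.

Definition NFunS (n : nat) : SSet :=
  {| sob := fun k => NFun k n;
     sact := fun k' k b s => nfun_act b s;
     sact_id := fun k s => nfun_act_id s;
     sact_comp := fun m k p f g s => nfun_act_comp f g s |}.

Lemma nfun_map_ok (k n n' : nat) (c : Dmor n n') (s : NFun k n) :
  nfunb [ffun i => (sval c (sval s i).1, sval c (sval s i).2)].
Proof.
case: s => s /= /andP [/forallP H1 /forallP H2]; apply/andP; split.
  by apply/forallP=> i; rewrite ffunE /=; apply: (monoP (valP c)); exact: H1.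
apply/forallP=> i; apply/forallP=> j; apply/implyP=> ij; rewrite !ffunE /=.
have /andP [h1 h2] := implyP (forallP (H2 i) j) ij.
by rewrite !(monoP (valP c)).
Qed.

Definition nfun_map (k n n' : nat) (c : Dmor n n') (s : NFun k n) : NFun k n' :=
  exist (fun s => nfunb s) _ (nfun_map_ok c s).

Lemma nfun_map_nat (n n' : nat) (c : Dmor n n') (k' k : nat) (b : Dmor k' k) (s : NFun k n) :
  nfun_map c (nfun_act b s) = nfun_act b (nfun_map c s).
Proof. by apply: val_inj; apply/ffunP=> i; rewrite /= !ffunE. Qed.

Definition NFunMap (n n' : nat) (c : Dmor n n') : SMap (NFunS n) (NFunS n') :=
  {| smap := fun k (s : NFunS n k) => (nfun_map c s : NFunS n' k);
     smap_nat := fun k' k b s => nfun_map_nat c b s |}.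

Record CoSSet := {
  cobj : nat -> SSet;
  cmap : forall n n', Dmor n n' -> SMap (cobj n) (cobj n');
  cmap_id : forall n k (s : cobj n k), smap (cmap (Did n)) s = s;
  cmap_comp : forall n n' n'' (c : Dmor n n') (d : Dmor n' n'') k (s : cobj n k),
      smap (cmap (Dcomp d c)) s = smap (cmap d) (smap (cmap c) s)
}.
Arguments cmap c0 {n n'} d.

Lemma nfun_map_id (n k : nat) (s : NFun k n) : nfun_map (Did n) s = s.
Proof. by apply: val_inj; apply/ffunP=> i; rewrite /= !ffunE; case: (sval s i). Qed.

Lemma nfun_map_comp (n n' n'' : nat) (c : Dmor n n') (d : Dmor n' n'') k (s : NFun k n) :
  nfun_map (Dcomp d c) s = nfun_map d (nfun_map c s).
Proof. by apply: val_inj; apply/ffunP=> i; rewrite /= !ffunE. Qed.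

Definition NFunCo : CoSSet :=
  {| cobj := NFunS;
     cmap := NFunMap;
     cmap_id := fun n k s => nfun_map_id s;
     cmap_comp := fun n n' n'' c d k s => nfun_map_comp c d s |}.

Definition Quot (T : Type) (E : relation T) := {P : T -> Prop | exists t, P = E t}.

Definition qclass (T : Type) (E : relation T) (t : T) : Quot E :=
  exist (fun P => exists t, P = E t) (E t) (ex_intro _ t erefl).

Definition qrep (T : Type) (E : relation T) (q : Quot E) : T :=
  proj1_sig (constructive_indefinite_description _ (proj2_sig q)).

Lemma qrep_spec (T : Type) (E : relation T) (q : Quot E) : proj1_sig q = E (qrep q).
Proof. exact: (proj2_sig (constructive_indefinite_description _ (proj2_sig q))). Qed.

Lemma qclass_rep (T : Type) (E : relation T) (q : Quot E) : qclass E (qrep q) = q.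
Proof.
case: q (qrep_spec q) => P HP /= e; rewrite /qclass.
move: (ex_intro _ _ _); rewrite -e => H; congr exist; exact: proof_irrelevance.
Qed.

Lemma qclass_eq (T : Type) (E : relation T) (eqE : equivalence T E) (t t' : T) :
  E t t' -> qclass E t = qclass E t'.
Proof.
case: eqE => Er Et Es Htt'.
have e : E t = E t'.
  apply: functional_extensionality => z; apply: propositional_extensionality.
  split=> H; [apply: (Et _ t) => //; exact: Es | exact: (Et _ t')].
rewrite /qclass; move: (ex_intro _ t _) (ex_intro _ t' _); rewrite e => H1 H2.
congr exist; exact: proof_irrelevance.
Qed.

Lemma qrep_class (T : Type) (E : relation T) (eqE : equivalence T E) (t : T) :
  E t (qrep (qclass E t)).
Proof.
have := qrep_spec (qclass E t); rewrite /= => ->; case: eqE => Er _ _; exact: Er.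
Qed.

(* Left Kan extension along the Yoneda embedding Δ -> sSet of a         *)
(* cosimplicial simplicial set F:                                       *)
(*   (Lan F X)_k = ( Σ_n X_n × F([n])_k ) / ~                           *)
(* where ~ is the equivalence relation generated by                     *)
(*   (n, α^* x, s) ~ (m, x, F(α) s)   for α : [n] -> [m], x ∈ X_m,       *)
(* s ∈ F([n])_k   (the coend ∫^n X_n × F([n]), computed levelwise).     *)

Definition LanT (F : CoSSet) (X : SSet) (k : nat) := {n : nat & (X n * cobj F n k)%type}.

Definition LanR (F : CoSSet) (X : SSet) (k : nat) : relation (LanT F X k) :=
  fun t t' => exists (n m : nat) (a : Dmor n m) (x : X m) (s : cobj F n k),
    t = existT _ n (sact X a x, s) /\ t' = existT _ m (x, smap (cmap F a) s).
Arguments LanR : clear implicits.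

Definition LanE (F : CoSSet) (X : SSet) (k : nat) : relation (LanT F X k) :=
  clos_refl_sym_trans _ (LanR F X k).
Arguments LanE : clear implicits.

Lemma LanE_equiv (F : CoSSet) (X : SSet) (k : nat) : equivalence _ (LanE F X k).
Proof.
split.
- move=> t; exact: rst_refl.
- move=> t1 t2 t3; exact: rst_trans.
- move=> t1 t2; exact: rst_sym.
Qed.

Definition lan_shift (F : CoSSet) (X : SSet) (k' k : nat) (b : Dmor k' k)
    (t : LanT F X k) : LanT F X k' :=
  existT _ (projT1 t) ((projT2 t).1, sact (cobj F (projT1 t)) b (projT2 t).2).

Lemma lan_shift_R (F : CoSSet) (X : SSet) (k' k : nat) (b : Dmor k' k) (t t' : LanT F X k) :
  LanR F X k t t' -> LanR F X k' (lan_shift b t) (lan_shift b t').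
Proof.
move=> [n [m [a [x [s [-> ->]]]]]].
exists n, m, a, x, (sact (cobj F n) b s); split => //=.
by rewrite smap_nat.
Qed.

Lemma lan_shift_E (F : CoSSet) (X : SSet) (k' k : nat) (b : Dmor k' k) (t t' : LanT F X k) :
  LanE F X k t t' -> LanE F X k' (lan_shift b t) (lan_shift b t').
Proof.
elim=> [t1 t2 H | t1 | t1 t2 _ IH | t1 t2 t3 _ IH1 _ IH2].
- by apply: rst_step; apply: lan_shift_R.
- exact: rst_refl.
- exact: rst_sym.
- exact: rst_trans IH1 IH2.
Qed.

Definition lan_act (F : CoSSet) (X : SSet) (k' k : nat) (b : Dmor k' k)
    (q : Quot (LanE F X k)) : Quot (LanE F X k') :=
  qclass (LanE F X k') (lan_shift b (qrep q)).

Lemma lan_act_id (F : CoSSet) (X : SSet) (k : nat) (q : Quot (LanE F X k)) :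
  lan_act (Did k) q = q.
Proof.
rewrite /lan_act /lan_shift sact_id; rewrite -[in RHS](qclass_rep q).
by case: (qrep q) => n [x s].
Qed.

Lemma lan_act_comp (F : CoSSet) (X : SSet) (m k p : nat) (f : Dmor m k) (g : Dmor k p)
    (q : Quot (LanE F X p)) :
  lan_act (Dcomp g f) q = lan_act f (lan_act g q).
Proof.
rewrite /lan_act; apply: qclass_eq; first exact: LanE_equiv.
have H := qrep_class (LanE_equiv F X k) (lan_shift g (qrep q)).
have := lan_shift_E f H; rewrite /lan_shift /= sact_comp.
by case: (qrep q) => n [x s].
Qed.

Definition LanY (F : CoSSet) (X : SSet) : SSet :=
  {| sob := fun k => Quot (LanE F X k);
     sact := fun k' k b q => lan_act b q;
     sact_id := fun k q => lan_act_id q;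
     sact_comp := fun m k p f g q => lan_act_comp f g q |}.

Definition ESd' (X : SSet) : SSet := LanY NFunCo X.


(* The canonical map ESd X -> ESd' X.                                   *)
(* On Δ^n it sends f : [2k+1] -> [n] to the k-simplex i |-> (f i, f (k+1+i)) *)
(* of N(Fun([1],[n])); being colimit-compatible, on a general X it sends *)
(* x ∈ X_{2k+1} = (ESd X)_k to the class of (2k+1, x, ι_k), where        *)
(* ι_k = (i |-> (i, k+1+i)) is the image of id_{[2k+1]}.                 *)

Lemma iota_ok (k : nat) :
  nfunb [ffun i : 'I_k.+1 => ((inord i : 'I_(k + k).+2), (inord (k.+1 + i) : 'I_(k + k).+2))].
Proof.
apply/andP; split.
  apply/forallP=> i; rewrite ffunE /=; have Hi := ltn_ord i; rewrite !inordK; lia.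
apply/forallP=> i; apply/forallP=> j; apply/implyP=> ij; rewrite !ffunE /=.
have Hi := ltn_ord i; have Hj := ltn_ord j; rewrite !inordK; lia.
Qed.

Definition iotak (k : nat) : NFun k (k + k).+1 := exist (fun s => nfunb s) _ (iota_ok k).

Lemma iota_nat (k' k : nat) (b : Dmor k' k) :
  nfun_act b (iotak k) = nfun_map (Djoin b) (iotak k').
Proof.
apply: val_inj; apply/ffunP=> i; rewrite /= !ffunE /=.
have Hi := ltn_ord i; set y := sval b i; have Hy := ltn_ord y.
congr pair; apply: val_inj; rewrite /=.
all: rewrite [in RHS]inordK; last by rewrite ltnS joinn_bound.
all: rewrite inordK; last by lia.
- rewrite /joinn inordK; last by lia.
  rewrite ifT; last by lia.
  by congr (nat_of_ord (sval b _)); apply: val_inj; rewrite /= inordK.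
- rewrite /joinn inordK; last by lia.
  rewrite ifF; last by lia.
  rewrite [k.+1 + _]addnC; congr (nat_of_ord (sval b _) + _); apply: val_inj.
  by rewrite /= inordK //; lia.
Qed.

Definition can_fun (X : SSet) (k : nat) (x : ESd X k) : ESd' X k :=
  qclass (LanE NFunCo X k) (existT _ (k + k).+1 (x, iotak k)).

Lemma can_nat (X : SSet) (k' k : nat) (b : Dmor k' k) (x : ESd X k) :
  can_fun (sact (ESd X) b x) = sact (ESd' X) b (can_fun x).
Proof.
rewrite /= /can_fun /lan_act; apply: qclass_eq; first exact: LanE_equiv.
set u := existT _ (k + k).+1 _.
rewrite /LanE; apply: (rst_trans _ _ _ (lan_shift b u)); last first.
  exact: lan_shift_E (qrep_class (LanE_equiv NFunCo X k) u).
apply: rst_step.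
exists (k' + k').+1, (k + k).+1, (Djoin b), x, (iotak k'); split => //=.
by rewrite /lan_shift /= iota_nat.
Qed.

Definition can_map (X : SSet) : SMap (ESd X) (ESd' X) :=
  {| smap := can_fun (X := X);
     smap_nat := fun k' k b x => can_nat b x |}.

(* The lift ESd' X -> X' is built cell by cell.  By Eilenberg-Zilber, ESd' X
   is glued from the nerves N(Fun([1],[n])), one for each nondegenerate
   n-simplex y of X, so by induction on n it suffices to extend a lift given on
   the base of N(Fun([1],[n])): on ESd Δ^n (the chains of pairs whose first
   coordinates all lie below all second coordinates), where it is prescribed by
   u, and on the boundary (the chains missing a vertex), where it is prescribed
   by the faces of y.
   The remaining nondegenerate simplices, chains of pairs that cover [n] but
   are not in ESd Δ^n, are matched by adding or removing the pivot (b0, b1),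
   where b0 is the least second coordinate and b1 the least second coordinate
   of a pair with first coordinate above b0.  Adding the chains that contain their pivot in
   increasing order of (size, -b0, -b1), each one meets what is already built
   exactly in the inner horn opposite its pivot, which the inner fibration
   fills. *)

From Stdlib Require Import Relations Wf_nat ClassicalEpsilon Classical.
From mathcomp Require Import all_boot.
From mathcomp Require Import zify.

Set Implicit Arguments.
Unset Strict Implicit.
Unset Printing Implicit Defensive.

(** * Simplicial operators *)

Lemma DcompE m n p (g : Dmor n p) (f : Dmor m n) i :
  sval (Dcomp g f) i = sval g (sval f i).
Proof. by rewrite /= ffunE. Qed.

Lemma DidE n i : sval (Did n) i = i.
Proof. by rewrite /= ffunE. Qed.

Definition Dconst_fun a n : {ffun 'I_a.+1 -> 'I_n.+1} := [ffun => ord0].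

Lemma Dconst_mono a n : monob (Dconst_fun a n).
Proof. by apply/forallP => i; apply/forallP => j; apply/implyP => _; rewrite !ffunE. Qed.

Definition Dconst a n : Dmor a n := exist (fun f => monob f) _ (Dconst_mono a n).

Lemma Dcomp_const a b n (f : Dmor a b) : Dcomp (Dconst b n) f = Dconst a n.
Proof. by apply: val_inj; apply/ffunP => i; rewrite DcompE /= !ffunE. Qed.

Definition coface_fun n j : {ffun 'I_n.+1 -> 'I_n.+2} :=
  [ffun i : 'I_n.+1 => inord (if i < j then (i : nat) else i.+1)].

Lemma cofaceE n j i :
  nat_of_ord (coface_fun n j i) = if i < j then (i : nat) else i.+1.
Proof. rewrite ffunE inordK //; have := ltn_ord i; case: ifP; lia. Qed.

Lemma coface_mono n j : monob (coface_fun n j).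
Proof.
apply/forallP => i; apply/forallP => i'; apply/implyP => ii'; rewrite !cofaceE.
by case: ifP; case: ifP; lia.
Qed.

Definition coface n j : Dmor n n.+1 := exist (fun f => monob f) _ (coface_mono n j).

(* The codegeneracy retracting [coface n j] off [j]; the clamp by [n] only
   matters for the junk case [j > n.+1]. *)
Definition coface_retr_fun n j : {ffun 'I_n.+2 -> 'I_n.+1} :=
  [ffun v : 'I_n.+2 => inord (minn (if v < j then (v : nat) else v.-1) n)].

Lemma coface_retrE n j v :
  nat_of_ord (coface_retr_fun n j v) = minn (if v < j then (v : nat) else v.-1) n.
Proof. rewrite ffunE inordK //; have := ltn_ord v; case: ifP; lia. Qed.

Lemma coface_retr_mono n j : monob (coface_retr_fun n j).
Proof.
apply/forallP => i; apply/forallP => i'; apply/implyP => ii'; rewrite !coface_retrE.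
by case: ifP; case: ifP; lia.
Qed.

Definition coface_retr n j : Dmor n.+1 n := exist (fun f => monob f) _ (coface_retr_mono n j).

Lemma coface_retrK n j (v : 'I_n.+2) : j < n.+2 -> nat_of_ord v != j ->
  sval (coface n j) (sval (coface_retr n j) v) = v.
Proof.
move=> jn vj; apply: val_inj; rewrite /= cofaceE coface_retrE; have := ltn_ord v.
by case: (ltnP v j) => h1; case: ifP => h2; lia.
Qed.

Lemma coface_neq n j (i : 'I_n.+1) : nat_of_ord (sval (coface n j) i) != j.
Proof. by rewrite /= cofaceE; case: ifP; lia. Qed.

Lemma coface_factor m n (t : Dmor m n.+1) (j : 'I_n.+2) :
  (forall i, sval t i != j) -> t = Dcomp (coface n j) (Dcomp (coface_retr n j) t).
Proof.
move=> H; apply: val_inj; apply/ffunP => i; rewrite !DcompE.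
by rewrite (coface_retrK (ltn_ord j)) //; exact: H.
Qed.

Definition Dsurj m n (f : Dmor m n) := forall l : 'I_n.+1, exists i, sval f i = l.

Lemma Dsurj_to0 m (t : Dmor m 0) : Dsurj t.
Proof. by move=> l; exists ord0; rewrite (ord1 l) (ord1 (sval t ord0)). Qed.

Lemma not_Dsurj_miss m n (t : Dmor m n) : ~ Dsurj t ->
  exists l : 'I_n.+1, forall i, sval t i != l.
Proof.
move=> H; apply: NNPP => H'; apply: H => l; apply: NNPP => H2.
by apply: H'; exists l => i; apply/eqP => e; apply: H2; exists i.
Qed.

Lemma not_Dsurj_factor m n (t : Dmor m n.+1) : ~ Dsurj t ->
  exists (j : 'I_n.+2) (t' : Dmor m n), t = Dcomp (coface n j) t'.
Proof.
case/not_Dsurj_miss => j Hj; exists j, (Dcomp (coface_retr n j) t).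
exact: coface_factor.
Qed.

Lemma coface_not_Dsurj n (j : 'I_n.+2) : ~ Dsurj (coface n j).
Proof. by move=> /(_ j) [i /(congr1 val) /eqP]; rewrite (negbTE (coface_neq _ _)). Qed.

Lemma coface2_retr n (j1 j2 : 'I_n.+3) : j1 != j2 ->
  exists (beta : Dmor n n.+2) (rho : Dmor n.+2 n),
    [/\ forall i, sval beta i != j1, forall i, sval beta i != j2
      & forall w : 'I_n.+3, w != j1 -> w != j2 -> sval beta (sval rho w) = w].
Proof.
move=> /eqP ne.
pose j2' := if j2 < j1 then (j2 : nat) else (j2 : nat).-1.
have ne' : (j1 : nat) <> j2 by move=> e; apply: ne; apply: val_inj.
have hj2' : j2' < n.+2 by rewrite /j2'; have := ltn_ord j2; have := ltn_ord j1; case: ifP; lia.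
exists (Dcomp (coface n.+1 j1) (coface n (Ordinal hj2'))),
       (Dcomp (coface_retr n (Ordinal hj2')) (coface_retr n.+1 j1)); split.
- by move=> i; rewrite DcompE; apply: coface_neq.
- move=> i; rewrite DcompE; apply/eqP => /(congr1 val) /=; rewrite cofaceE.
  have := coface_neq (Ordinal hj2') i; rewrite /= cofaceE /j2'.
  by have := ltn_ord j1; have := ltn_ord j2; repeat case: ifP; lia.
- move=> w w1 w2.
  have hw : nat_of_ord (sval (coface_retr n.+1 j1) w) != Ordinal hj2'.
    have w1' : (w : nat) <> j1 by move=> e; move: w1; rewrite (val_inj e) eqxx.
    have w2' : (w : nat) <> j2 by move=> e; move: w2; rewrite (val_inj e) eqxx.
    rewrite /= coface_retrE /j2'; have := ltn_ord w; have := ltn_ord j1; have := ltn_ord j2.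
    by repeat case: ifP; lia.
  by rewrite !DcompE (coface_retrK hj2' hw) (coface_retrK (ltn_ord j1)).
Qed.

Lemma smono_ge m (f : 'I_m.+1 -> 'I_m.+1) :
  (forall i j : 'I_m.+1, i < j -> f i < f j) -> forall i : 'I_m.+1, i <= f i.
Proof.
move=> H [i]; elim: i => [//|i IH] Hi.
have Hi' : i < m.+1 by lia.
by have /= := IH Hi'; have /= := H (Ordinal Hi') (Ordinal Hi) (ltnSn i); lia.
Qed.

(* The upper bound comes from [smono_ge] applied to the conjugate of [f] by
   the order reversal [i |-> m - i]. *)
Lemma smono_id m (f : 'I_m.+1 -> 'I_m.+1) :
  (forall i j : 'I_m.+1, i < j -> f i < f j) -> forall i : 'I_m.+1, f i = i.
Proof.
move=> H i; apply: val_inj; apply/eqP; rewrite eqn_leq (smono_ge H) andbT.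
pose rev (x : 'I_m.+1) : 'I_m.+1 := inord (m - x).
have revE x : nat_of_ord (rev x) = m - x by rewrite inordK //; lia.
have Hg (a b : 'I_m.+1) : a < b -> rev (f (rev a)) < rev (f (rev b)).
  move=> ab; rewrite !revE; have := H (rev b) (rev a); rewrite !revE.
  by have := ltn_ord (f (rev a)); have := ltn_ord (f (rev b)); have := ltn_ord b; lia.
have revK x : rev (rev x) = x by apply: val_inj; rewrite /= !revE; have := ltn_ord x; lia.
have := smono_ge Hg (rev i); rewrite revK !revE.
by rewrite /=; have := ltn_ord i; have := ltn_ord (f i); lia.
Qed.

Lemma section_smono n m (s : Dmor n m) (d : 'I_m.+1 -> 'I_n.+1) :
  (forall l, sval s (d l) = l) -> forall l l' : 'I_m.+1, l < l' -> d l < d l'.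
Proof.
move=> H l l' ll'; rewrite ltnNge; apply/negP => h.
by have := monoP (valP s) h; rewrite !H; lia.
Qed.

Lemma Dsurj_section n m (s : Dmor n m) (i0 : 'I_n.+1) : Dsurj s ->
  exists d : Dmor m n, (forall l, sval s (sval d l) = l) /\ sval d (sval s i0) = i0.
Proof.
move=> Hs.
pose d := [ffun l => if l == sval s i0 then i0 else odflt i0 [pick i | sval s i == l]].
have Hd l : sval s (d l) = l.
  rewrite /d ffunE; case: eqP => [->//|_].
  case: pickP => [i /eqP //|/= H]; have [i Hi] := Hs l.
  by have := H i; rewrite Hi eqxx.
have Hm : monob d.
  apply/forallP => i; apply/forallP => j; apply/implyP.
  rewrite leq_eqVlt => /orP [/eqP/val_inj -> //|ij].
  exact/ltnW/(section_smono Hd).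
by exists (exist (fun f => monob f) d Hm); split => //=; rewrite /d ffunE eqxx.
Qed.

Lemma Dsurj_endo_id m (s : Dmor m m) : Dsurj s -> s = Did m.
Proof.
move=> Hs; have [d [Hd _]] := Dsurj_section ord0 Hs.
have did := smono_id (section_smono Hd).
by apply: val_inj; apply/ffunP => l; rewrite DidE -{1}(did l) Hd.
Qed.

(** * The Eilenberg-Zilber lemma *)

Section EilenbergZilber.
Variable X : SSet.

Definition nondegenerate n (x : X n) :=
  forall m (s : Dmor n m) (y : X m), x = sact X s y -> n <= m.

Lemma nondegenerate_endo_surj m (y : X m) (t : Dmor m m) (z : X m) :
  nondegenerate y -> y = sact X t z -> Dsurj t.
Proof.
case: m y t z => [|m] y t z Hy e; first exact: Dsurj_to0.
apply: NNPP => /not_Dsurj_factor [j [t' et]].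
by move: e; rewrite et sact_comp => /Hy; lia.
Qed.

Lemma ez_exists n (x : X n) : exists m (s : Dmor n m) (y : X m),
  [/\ x = sact X s y, Dsurj s & nondegenerate y].
Proof.
pose P m := exists (s : Dmor n m) (y : X m), x = sact X s y.
have Pn : P n by exists (Did n), x; rewrite sact_id.
have [m [[[s [y e]] Hmin] _]] :=
  dec_inh_nat_subset_has_unique_least_element P (fun m => classic (P m)) (ex_intro _ n Pn).
exists m, s, y; split => //.
- case: m s y e Hmin => [|m] s y e Hmin; first exact: Dsurj_to0.
  apply: NNPP => /not_Dsurj_factor [j [s' es]].
  suff /leP : (m.+1 <= m)%coq_nat by rewrite ltnn.
  by apply: Hmin; exists s', (sact X (coface m j) y); rewrite e es sact_comp.
- move=> m' s' y' e'; apply/leP/Hmin; exists (Dcomp s' s), y'.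
  by rewrite sact_comp -e'.
Qed.

Lemma sact_section n m1 m2 (s1 : Dmor n m1) (y1 : X m1) (s2 : Dmor n m2) (y2 : X m2)
    (d : Dmor m1 n) : (forall l, sval s1 (sval d l) = l) ->
  sact X s1 y1 = sact X s2 y2 -> y1 = sact X (Dcomp s2 d) y2.
Proof.
move=> Hd E; rewrite sact_comp -E -sact_comp.
have -> : Dcomp s1 d = Did m1 by apply: val_inj; apply/ffunP => l; rewrite DcompE DidE Hd.
by rewrite sact_id.
Qed.

(* Sections of [s1] through each point show that [s1] and [s2] agree pointwise. *)
Lemma ez_unique n m1 (s1 : Dmor n m1) (y1 : X m1) m2 (s2 : Dmor n m2) (y2 : X m2) :
  Dsurj s1 -> nondegenerate y1 -> Dsurj s2 -> nondegenerate y2 ->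
  sact X s1 y1 = sact X s2 y2 ->
  existT (fun m => (Dmor n m * X m)%type) m1 (s1, y1) = existT _ m2 (s2, y2).
Proof.
move=> Hs1 Hy1 Hs2 Hy2 E.
have [d1 [Hd1 _]] := Dsurj_section ord0 Hs1.
have [d2 [Hd2 _]] := Dsurj_section ord0 Hs2.
have e1 := sact_section Hd1 E.
have em : m1 = m2 by have := Hy1 _ _ _ e1; have := Hy2 _ _ _ (sact_section Hd2 (esym E)); lia.
subst m2.
have e1id := Dsurj_endo_id (nondegenerate_endo_surj Hy1 e1).
rewrite e1id sact_id in e1.
rewrite -e1 in E *; have -> // : s1 = s2.
apply: val_inj; apply/ffunP => i.
have [d [Hd Hdi]] := Dsurj_section i Hs1.
have eid := Dsurj_endo_id (nondegenerate_endo_surj Hy1 (sact_section Hd E)).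
by have := congr1 (fun f : Dmor m1 m1 => sval f (sval s1 i)) eid; rewrite /= DcompE DidE Hdi.
Qed.

Definition ez_prop n (x : X n) (p : {m : nat & (Dmor n m * X m)%type}) : Prop :=
  [/\ x = sact X (projT2 p).1 (projT2 p).2, Dsurj (projT2 p).1 & nondegenerate (projT2 p).2].

Lemma ez_prop_exists n (x : X n) : exists p, ez_prop x p.
Proof. by have [m [s [y H]]] := ez_exists x; exists (existT _ m (s, y)). Qed.

Definition ez n (x : X n) : {m : nat & (Dmor n m * X m)%type} :=
  proj1_sig (constructive_indefinite_description _ (ez_prop_exists x)).

Lemma ez_spec n (x : X n) : ez_prop x (ez x).
Proof. exact: proj2_sig (constructive_indefinite_description _ (ez_prop_exists x)). Qed.

Lemma ez_eq n m (s : Dmor n m) (y : X m) : Dsurj s -> nondegenerate y ->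
  ez (sact X s y) = existT _ m (s, y).
Proof.
move=> Hs Hy; have := ez_spec (sact X s y).
by case: (ez _) => m' [s' y'] /= [E Hs' Hy']; apply: ez_unique => //; rewrite -E.
Qed.

Definition ezdim n (x : X n) := projT1 (ez x).

Lemma ezdim_sact n m (s : Dmor n m) (y : X m) : ezdim (sact X s y) <= m.
Proof.
rewrite /ezdim; have := ez_spec (sact X s y).
case: (ez _) => m' [s' y'] /= [E Hs' Hy'].
have [d [Hd _]] := Dsurj_section ord0 Hs'.
exact: Hy' _ _ _ (sact_section Hd (esym E)).
Qed.

Lemma ezdim_le n (x : X n) : ezdim x <= n.
Proof. by rewrite -[x]sact_id; apply: ezdim_sact. Qed.

Lemma ezdim_not_Dsurj n n' (b : Dmor n' n) (y : X n) : ~ Dsurj b -> ezdim (sact X b y) < n.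
Proof.
case: n b y => [|n] b y nb; first by case: nb; apply: Dsurj_to0.
have [j [b' ->]] := not_Dsurj_factor nb.
by rewrite sact_comp; apply: leq_ltn_trans (ezdim_sact _ _) _.
Qed.
End EilenbergZilber.

(** * Filling one inner horn *)

Section InnerHornExtension.
Variables (X' Y' : SSet) (p : SMap X' Y') (K : SSet) (G : SMap K Y').

Definition subcomplex (F : forall k, K k -> Prop) :=
  forall k k' (b : Dmor k' k) t, F k t -> F k' (sact K b t).

Definition partial_lift (F : forall k, K k -> Prop) (h : forall k, K k -> X' k) :=
  (forall k k' (b : Dmor k' k) t, F k t -> h k' (sact K b t) = sact X' b (h k t)) /\
  (forall k t, F k t -> smap p (h k t) = smap G t).

Definition add_simplex n (F : forall k, K k -> Prop) (sig : K n) k (t : K k) :=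
  F k t \/ exists a, t = sact K a sig.

Lemma inner_horn_extension (Hp : inner_fibration p) n j (sig : K n)
    (F : forall k, K k -> Prop) (h : forall k, K k -> X' k) :
  0 < j < n ->
  (forall k (a b : Dmor k n), sact K a sig = sact K b sig -> a = b) ->
  subcomplex F ->
  (forall k (a : Dmor k n), F k (sact K a sig) <-> hornb j a) ->
  partial_lift F h ->
  exists h', (forall k t, F k t -> h' k t = h k t) /\ partial_lift (add_simplex F sig) h'.
Proof.
move=> /andP [j0 jn] sinj Fcl Fh [hnat hp].
have unat k' k (f : Dmor k' k) (x : Horn n j k) :
    h k' (sact K (sval (sact (Horn n j) f x)) sig) = sact X' f (h k (sact K (sval x) sig)).
  by rewrite /= sact_comp; apply/hnat/Fh/(valP x).
pose u : SMap (Horn n j) X' := {| smap := fun k (x : Horn n j k) => h k (sact K (sval x) sig);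
                                   smap_nat := unat |}.
have vnat k' k (f : Dmor k' k) (x : Simplex n k) :
    smap G (sact K (sact (Simplex n) f x) sig) = sact Y' f (smap G (sact K x sig)).
  by rewrite /= sact_comp smap_nat.
pose v : SMap (Simplex n) Y' := {| smap := fun k (x : Simplex n k) => smap G (sact K x sig);
                                   smap_nat := vnat |}.
have [L [HLu HLv]] : exists L : SMap (Simplex n) X',
    (forall k (a : Horn n j k), smap L (smap (horn_incl n j) a) = smap u a) /\
    (forall k (b : Simplex n k), smap p (smap L b) = smap v b).
  by apply: Hp => // k a; apply/hp/Fh/(valP a).
(* [L] on the simplices of [sig], [h] elsewhere: they agree on the horn. *)
pose h' k (t : K k) :=
  if excluded_middle_informative (F k t) is left _ then h k t else
  if excluded_middle_informative (exists a, t = sact K a sig) is left e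
  then smap L (proj1_sig (constructive_indefinite_description _ e)) else h k t.
have h'F k t : F k t -> h' k t = h k t.
  by rewrite /h'; case: excluded_middle_informative.
have h'sig k (a : Dmor k n) : h' k (sact K a sig) = smap L a.
  rewrite /h'; case: excluded_middle_informative => [Ft|_].
    by have := HLu k (exist _ a (iffLR (Fh k a) Ft)).
  case: excluded_middle_informative => [e|]; last by case; exists a.
  by case: (constructive_indefinite_description _ e) => a' /= /sinj ->.
exists h'; split => //; split.
- move=> k k' b t [Ft|[a ->]]; first by rewrite !h'F //; [apply: hnat | apply: Fcl].
  by rewrite -sact_comp !h'sig -[Dcomp a b]/(sact (Simplex n) b a) smap_nat.
- move=> k t [Ft|[a ->]]; first by rewrite h'F //; apply: hp.
  by rewrite h'sig HLv.
Qed.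
End InnerHornExtension.

(** * Chains of pairs and the pivot pairing *)

Section Chains.
Variable m : nat.

Ltac slia := simpl in *; lia.

Definition Pair := ('I_m.+1 * 'I_m.+1)%type.
Implicit Types (S W c : {set Pair}) (x y z w : Pair).

Definition le_pair x y := (x.1 <= y.1) && (x.2 <= y.2).
Definition chainb S :=
  [forall x in S, x.1 <= x.2] && [forall x in S, forall y in S, le_pair x y || le_pair y x].

Lemma chain_diag S x : chainb S -> x \in S -> x.1 <= x.2.
Proof. by case/andP => /forall_inP H _ /H. Qed.

Lemma chain_cmp S x y : chainb S -> x \in S -> y \in S -> le_pair x y || le_pair y x.
Proof. by case/andP => _ /forall_inP H /H /forall_inP H' /H'. Qed.

Lemma chainP S : (forall x, x \in S -> x.1 <= x.2) ->
  (forall x y, x \in S -> y \in S -> le_pair x y || le_pair y x) -> chainb S.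
Proof.
move=> H1 H2; apply/andP; split; apply/forall_inP => x xS; first exact: H1.
by apply/forall_inP => y yS; apply: H2.
Qed.

Lemma chain_sub S S' : S \subset S' -> chainb S' -> chainb S.
Proof.
move=> sub ch; apply: chainP => [x xS|x y xS yS].
  exact: chain_diag ch (subsetP sub _ xS).
exact: chain_cmp ch (subsetP sub _ xS) (subsetP sub _ yS).
Qed.

(* Minima of second coordinates, written [m - \max (m - _)]; the junk value on
   an empty range is [m]. *)
Definition snd_min S := m - \max_(x in S) (m - x.2).
Definition snd_piv S := m - \max_(x in S | snd_min S < x.1) (m - x.2).

Lemma snd_min_le S x : x \in S -> snd_min S <= x.2.
Proof.
move=> xS; have h : m - x.2 <= \max_(y in S) (m - y.2) by exact: leq_bigmax_cond.
rewrite /snd_min; have := ltn_ord x.2; slia.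
Qed.

Lemma snd_min_ex S : S != set0 -> exists2 x, x \in S & nat_of_ord x.2 = snd_min S.
Proof.
move=> /set0Pn [y yS].
have [z zS e] : {z | z \in S & \max_(x in S) (m - x.2) = m - z.2}.
  by apply: eq_bigmax_cond; rewrite card_gt0; apply/set0Pn; exists y.
exists z => //; rewrite /snd_min e; have := ltn_ord z.2; slia.
Qed.

Lemma snd_min_eq S y : y \in S -> (forall x, x \in S -> y.2 <= x.2) -> snd_min S = y.2.
Proof.
move=> yS H; have := snd_min_le yS.
have [x xS <-] : exists2 x, x \in S & nat_of_ord x.2 = snd_min S.
  by apply: snd_min_ex; apply/set0Pn; exists y.
by have := H x xS; slia.
Qed.

Lemma snd_min_sub S S' : S \subset S' -> S != set0 -> snd_min S' <= snd_min S.
Proof. by move=> sub /snd_min_ex [x xS <-]; apply: snd_min_le; exact: (subsetP sub). Qed.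

Lemma snd_min_bound S : snd_min S <= m. Proof. rewrite /snd_min; slia. Qed.
Lemma snd_piv_bound S : snd_piv S <= m. Proof. rewrite /snd_piv; slia. Qed.

Lemma snd_piv_le S x : x \in S -> snd_min S < x.1 -> snd_piv S <= x.2.
Proof.
move=> xS lt; have h : m - x.2 <= \max_(y in S | snd_min S < y.1) (m - y.2).
  by apply: leq_bigmax_cond; rewrite xS.
rewrite /snd_piv; have := ltn_ord x.2; slia.
Qed.

Lemma snd_piv_ex S y : y \in S -> snd_min S < y.1 ->
  exists x, [/\ x \in S, snd_min S < x.1 & nat_of_ord x.2 = snd_piv S].
Proof.
move=> yS yl.
set z := [arg max_(i > y | (i \in S) && (snd_min S < i.1)) (m - i.2)].
have e : \max_(x in S | snd_min S < x.1) (m - x.2) = m - z.2.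
  by apply: bigmax_eq_arg; rewrite yS.
have /andP [zS zl] : (z \in S) && (snd_min S < z.1).
  by rewrite /z; case: arg_maxnP => //; rewrite yS yl.
exists z; split => //; rewrite /snd_piv e; have := ltn_ord z.2; slia.
Qed.

Lemma snd_piv_eq S y : y \in S -> snd_min S < y.1 ->
  (forall x, x \in S -> snd_min S < x.1 -> y.2 <= x.2) -> snd_piv S = y.2.
Proof.
move=> yS yl H; have := snd_piv_le yS yl; have [x [xS xl <-]] := snd_piv_ex yS yl.
by have := H x xS xl; slia.
Qed.

(* The vertex sets of the simplices of ESd Δ^m are the [joinb] chains, those of
   the boundary of N(Fun([1],[m])) the chains that do not [coverb] [m]. *)
Definition joinb S := [forall x in S, forall y in S, x.1 <= y.2].
Definition coverb S :=
  [forall v : 'I_m.+1, [exists x in S, (x.1 == v) || (x.2 == v)]].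
Definition baseb S := joinb S || ~~ coverb S.
Definition interiorb S := [&& chainb S, S != set0, coverb S & ~~ joinb S].
Definition pivot S : Pair := (inord (snd_min S), inord (snd_piv S)).
Definition lowerb S := interiorb S && (pivot S \notin S).
Definition add_pivot S := pivot S |: S.
Definition drop_pivot S := S :\ pivot S.
(* Encodes the lexicographic order on [(#|S|, -snd_min S, -snd_piv S)]. *)
Definition key S := #|S| * (m.+1 * m.+1) + (m - snd_min S) * m.+1 + (m - snd_piv S).

Lemma pivot1 S : nat_of_ord (pivot S).1 = snd_min S.
Proof. by rewrite /= inordK // ltnS snd_min_bound. Qed.
Lemma pivot2 S : nat_of_ord (pivot S).2 = snd_piv S.
Proof. by rewrite /= inordK // ltnS snd_piv_bound. Qed.

Lemma pivot_eq S S' : snd_min S = snd_min S' -> snd_piv S = snd_piv S' -> pivot S = pivot S'.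
Proof. by rewrite /pivot => -> ->. Qed.

Lemma joinb_sub S S' : S \subset S' -> joinb S' -> joinb S.
Proof.
move=> sub /forall_inP H; apply/forall_inP => x xS; apply/forall_inP => y yS.
by have /forall_inP := H x (subsetP sub _ xS); apply; exact: (subsetP sub).
Qed.

Lemma coverb_sub S S' : S \subset S' -> coverb S -> coverb S'.
Proof.
move=> sub /forallP H; apply/forallP => v; have /exists_inP [x xS hx] := H v.
by apply/exists_inP; exists x => //; exact: (subsetP sub).
Qed.

Lemma baseb_sub S S' : S \subset S' -> baseb S' -> baseb S.
Proof.
move=> sub /orP [h|h]; apply/orP; [left; exact: joinb_sub h|right].
by apply: contra h; apply: coverb_sub.
Qed.

Lemma interiorb_sup S W : interiorb S -> S \subset W -> ~~ baseb W.
Proof.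
case/and4P => _ _ fS nE sub; rewrite negb_or negbK (coverb_sub sub fS) andbT.
by apply: contra nE; apply: joinb_sub.
Qed.

Lemma not_baseb_interiorb W : chainb W -> W != set0 -> ~~ baseb W -> interiorb W.
Proof. by move=> ch ne; rewrite negb_or negbK => /andP [h1 h2]; apply/and4P. Qed.

Lemma interiorb_above S : interiorb S -> exists x, x \in S /\ snd_min S < x.1.
Proof.
case/and4P => _ _ _ /forall_inPn [x xS /forall_inPn [y yS]]; rewrite -ltnNge => lt.
exists x; split => //; have := snd_min_le yS; move: lt; simpl; slia.
Qed.

Lemma snd_piv_ex_interior S : interiorb S ->
  exists z, [/\ z \in S, snd_min S < z.1 & nat_of_ord z.2 = snd_piv S].
Proof. by move=> /interiorb_above [y [yS yl]]; apply: snd_piv_ex yS yl. Qed.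

Lemma snd_min_lt_piv S : interiorb S -> snd_min S < snd_piv S.
Proof.
move=> H; have [z [zS zl <-]] := snd_piv_ex_interior H.
have := chain_diag (proj1 (andP H)) zS; slia.
Qed.

Lemma pivot_cmp S x : interiorb S -> x \in S ->
  (if snd_min S < x.1 then le_pair (pivot S) x else le_pair x (pivot S)).
Proof.
move=> H xS; rewrite /le_pair pivot1 pivot2; case: ifP => xl.
  by rewrite (snd_piv_le xS xl) andbT; slia.
have [z [zS zl ze]] := snd_piv_ex_interior H.
rewrite -ze; have := chain_cmp (proj1 (andP H)) xS zS; rewrite /le_pair.
case/orP => /andP [h1 h2]; first by apply/andP; split => //; slia.
slia.
Qed.

Lemma snd_min_add_pivot S : interiorb S -> snd_min (add_pivot S) = snd_min S.
Proof.
move=> H; have [e eS ee] := snd_min_ex (proj1 (andP (proj2 (andP H)))).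
rewrite -ee; apply: snd_min_eq; first by rewrite /add_pivot in_setU1 eS orbT.
move=> x; rewrite /add_pivot in_setU1 => /orP [/eqP ->|xS]; last by rewrite ee snd_min_le.
by rewrite pivot2 ee; have := snd_min_lt_piv H; slia.
Qed.

Lemma snd_piv_add_pivot S : interiorb S -> snd_piv (add_pivot S) = snd_piv S.
Proof.
move=> H; have [z [zS zl ze]] := snd_piv_ex_interior H.
rewrite -ze; apply: snd_piv_eq; first by rewrite /add_pivot in_setU1 zS orbT.
  by rewrite snd_min_add_pivot.
move=> x; rewrite /add_pivot in_setU1 snd_min_add_pivot // => /orP [/eqP ->|xS].
  by rewrite pivot1; slia.
by move=> xl; rewrite ze snd_piv_le.
Qed.

Lemma pivot_add_pivot S : interiorb S -> pivot (add_pivot S) = pivot S.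
Proof. by move=> H; apply: pivot_eq; [apply: snd_min_add_pivot | apply: snd_piv_add_pivot]. Qed.

Lemma add_pivot_chain S : interiorb S -> chainb (add_pivot S).
Proof.
move=> H; have ch := proj1 (andP H).
apply: chainP => [x|x y]; rewrite /add_pivot !in_setU1.
  case/orP => [/eqP ->|xS]; last exact: chain_diag ch xS.
  by rewrite pivot1 pivot2; have := snd_min_lt_piv H; slia.
have cmp := pivot_cmp H.
case/orP => [/eqP ->|xS]; case/orP => [/eqP ->|yS].
- by rewrite /le_pair !leqnn.
- by have := cmp _ yS; case: ifP => _ ->; rewrite ?orbT.
- by have := cmp _ xS; case: ifP => _ ->; rewrite ?orbT.
- exact: chain_cmp ch xS yS.
Qed.

Lemma snd_min_ex_drop S : interiorb S ->
  exists2 e, e \in drop_pivot S & nat_of_ord e.2 = snd_min S.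
Proof.
move=> H; have [e eS ee] := snd_min_ex (proj1 (andP (proj2 (andP H)))).
exists e => //; rewrite in_setD1 eS andbT; apply/eqP => ep.
by have := snd_min_lt_piv H; rewrite -ee ep pivot2 ltnn.
Qed.

Lemma snd_piv_ex_drop S : interiorb S ->
  exists z, [/\ z \in drop_pivot S, snd_min S < z.1 & nat_of_ord z.2 = snd_piv S].
Proof.
move=> H; have [z [zS zl ze]] := snd_piv_ex_interior H.
exists z; split => //; rewrite in_setD1 zS andbT; apply/eqP => zp.
by move: zl; rewrite zp pivot1 ltnn.
Qed.

Lemma snd_min_drop_pivot S : interiorb S -> snd_min (drop_pivot S) = snd_min S.
Proof.
move=> H; have [e eD ee] := snd_min_ex_drop H.
rewrite -ee; apply: snd_min_eq => // x /setD1P [_ xS]; rewrite ee; exact: snd_min_le.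
Qed.

Lemma snd_piv_drop_pivot S : interiorb S -> snd_piv (drop_pivot S) = snd_piv S.
Proof.
move=> H; have [z [zD zl ze]] := snd_piv_ex_drop H.
rewrite -ze; apply: snd_piv_eq; rewrite ?snd_min_drop_pivot // => x /setD1P [_ xS] xl.
by rewrite ze; apply: snd_piv_le.
Qed.

Lemma pivot_drop_pivot S : interiorb S -> pivot (drop_pivot S) = pivot S.
Proof. by move=> H; apply: pivot_eq; [apply: snd_min_drop_pivot | apply: snd_piv_drop_pivot]. Qed.

Lemma interiorb_drop_pivot S : interiorb S -> interiorb (drop_pivot S).
Proof.
move=> H; case/and4P: (H) => ch _ fS _.
have [e eD ee] := snd_min_ex_drop H; have [z [zD zl ze]] := snd_piv_ex_drop H.
apply/and4P; split.
- exact: chain_sub (subsetDl _ _) ch.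
- by apply/set0Pn; exists e.
- apply/forallP => v; have /exists_inP [x xS hx] := forallP fS v.
  case: (eqVneq x (pivot S)) => [xp|xp]; last first.
    by apply/exists_inP; exists x; rewrite // in_setD1 xp.
  apply/exists_inP; case/orP: hx => /eqP <-; rewrite xp; [exists e|exists z] => //;
    by apply/orP; right; apply/eqP/val_inj; rewrite /= ?pivot1 ?pivot2 ?ee ?ze.
- by apply/negP => /forall_inP/(_ z zD)/forall_inP/(_ e eD); rewrite ee leqNgt zl.
Qed.

Lemma drop_pivot_lowerb S : interiorb S -> lowerb (drop_pivot S).
Proof.
move=> H; rewrite /lowerb interiorb_drop_pivot // pivot_drop_pivot //.
by rewrite /drop_pivot setD11.
Qed.

Lemma sub_add_pivot_drop_pivot S : interiorb S -> S \subset add_pivot (drop_pivot S).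
Proof.
move=> H; rewrite /add_pivot pivot_drop_pivot //.
by apply/subsetP => x xS; rewrite /drop_pivot in_setU1 in_setD1 xS andbT orbN.
Qed.

Lemma card_add_pivot S : lowerb S -> #|add_pivot S| = #|S|.+1.
Proof. by case/andP => _ h; rewrite /add_pivot cardsU1 h. Qed.

Lemma key_lt S S' :
  #|S| < #|S'| \/ (#|S| = #|S'| /\ (snd_min S' < snd_min S \/
    snd_min S = snd_min S' /\ snd_piv S' < snd_piv S)) ->
  key S < key S'.
Proof.
have := snd_min_bound S; have := snd_min_bound S'.
have := snd_piv_bound S; have := snd_piv_bound S'; rewrite /key.
move: (snd_min S) (snd_min S') (snd_piv S) (snd_piv S') #|S| #|S'| => a a' b b' s s' ? ? ? ?.
by case=> [lt|[-> [lt|[-> lt]]]]; nia.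
Qed.

Lemma key_le S S' : key S <= key S' ->
  #|S| < #|S'| \/ (#|S| = #|S'| /\ (snd_min S' < snd_min S \/
    snd_min S = snd_min S' /\ snd_piv S' <= snd_piv S)).
Proof. by move=> H; have := @key_lt S' S; lia. Qed.

Lemma snd_piv_sub S W : interiorb S -> S \subset W -> snd_min W = snd_min S ->
  snd_piv W <= snd_piv S.
Proof.
move=> MS sub eb; have [x [xS xl <-]] := snd_piv_ex_interior MS.
by apply: snd_piv_le (subsetP sub _ xS) _; rewrite eb.
Qed.

Lemma lowerb_sub_add_pivot_eq c c' : lowerb c -> lowerb c' -> c \subset add_pivot c' ->
  key c' <= key c -> c = c'.
Proof.
move=> /andP [Mc pc] /andP [Mc' pc'] sub /key_le hk.
have ne : c != set0 by case/and4P: Mc.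
have pin : pivot c' \notin c.
  apply/negP => pin.
  have hb : snd_min c' <= snd_min c by rewrite -(snd_min_add_pivot Mc'); apply: snd_min_sub.
  have hc : #|c| <= #|c'|.
    have := subset_leqif_cards sub; rewrite card_add_pivot ?/lowerb ?Mc' ?pc' // => -[le eqv].
    rewrite -ltnS ltn_neqAle le andbT eqv; apply: contraNN pc => /eqP ->.
    by rewrite pivot_add_pivot // setU11.
  have [eb hp] : snd_min c' = snd_min c /\ snd_piv c <= snd_piv c' by case: hk; lia.
  have hp' : snd_piv c' <= snd_piv c.
    by rewrite -(snd_piv_add_pivot Mc'); apply: snd_piv_sub; rewrite ?snd_min_add_pivot.
  by move: pc; rewrite (@pivot_eq c c') ?pin //; lia.
have sub' : c \subset c'.
  apply/subsetP => x xc; move: (subsetP sub _ xc); rewrite in_setU1.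
  by case/orP => // /eqP ex; move: pin; rewrite -ex xc.
apply/eqP; rewrite eqEcard sub' /=; by case: hk => [/ltnW|[->]].
Qed.

Lemma key_drop_pivot_lt c w : lowerb c -> w \in c -> interiorb (add_pivot c :\ w) ->
  key (drop_pivot (add_pivot c :\ w)) < key c.
Proof.
move=> /andP [Mc pc] wc MF; set F := add_pivot c :\ w.
have wp : w != pivot c by apply: contraNneq pc => <-.
have pF : pivot c \in F by rewrite in_setD1 eq_sym wp setU11.
have cF : #|F| = #|c|.
  have wT : w \in add_pivot c by rewrite in_setU1 wc orbT.
  by have := cardsD1 w (add_pivot c); rewrite wT cardsU1 pc add1n => -[].
have hb : snd_min c <= snd_min F.
  rewrite -(snd_min_add_pivot Mc); apply: snd_min_sub (subsetDl _ _) _.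
  by apply/set0Pn; exists (pivot c).
have hp : snd_min F = snd_min c -> snd_piv c <= snd_piv F.
  move=> eb; rewrite -(snd_piv_add_pivot Mc).
  by apply: (snd_piv_sub MF (subsetDl _ _)); rewrite snd_min_add_pivot.
apply: key_lt; rewrite snd_min_drop_pivot // snd_piv_drop_pivot //.
have hcard : #|c| = (pivot F \in F) + #|drop_pivot F| by rewrite -cF; apply: cardsD1.
case: (boolP (pivot F \in F)) hcard => [_|pFF] /= hcard; first by left; lia.
right; split; first by lia.
suff : ~ (snd_min F = snd_min c /\ snd_piv F = snd_piv c) by lia.
by case=> eb ep; move: pFF; rewrite (pivot_eq eb ep) pF.
Qed.
End Chains.

Section Vertices.
Variable m : nat.
Implicit Types (T : {set Pair m}) (x y : Pair m).

Definition verts k (t : NFun k m) : {set Pair m} := [set sval t i | i in 'I_k.+1].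

Lemma nfun_diag k (t : NFun k m) i : (sval t i).1 <= (sval t i).2.
Proof. by case: t => s /= /andP [/forallP H _]. Qed.

Lemma nfun_mono k (t : NFun k m) (i j : 'I_k.+1) : i <= j -> le_pair (sval t i) (sval t j).
Proof. by case: t => s /= /andP [_ /forallP H] ij; have /forallP /(_ j) /implyP := H i; apply. Qed.

Lemma mem_verts k (t : NFun k m) i : sval t i \in verts t.
Proof. by apply/imsetP; exists i. Qed.

Lemma vertsP k (t : NFun k m) x : reflect (exists i, x = sval t i) (x \in verts t).
Proof. by apply: (iffP imsetP) => [[i _ ->]|[i ->]]; exists i. Qed.

Lemma verts_chain k (t : NFun k m) : chainb (verts t).
Proof.
apply: chainP => [x /vertsP [i ->]|x y /vertsP [i ->] /vertsP [j ->]]; first exact: nfun_diag.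
case: (leqP i j) => ij; first by rewrite nfun_mono.
by rewrite (nfun_mono t (ltnW ij)) orbT.
Qed.

Lemma verts_neq0 k (t : NFun k m) : verts t != set0.
Proof. by apply/set0Pn; exists (sval t ord0); apply: mem_verts. Qed.

Lemma verts_act k k' (b : Dmor k' k) (t : NFun k m) : verts (nfun_act b t) \subset verts t.
Proof. by apply/subsetP => x /vertsP [i ->]; rewrite /= ffunE mem_verts. Qed.

Lemma verts_map k n' (b : Dmor n' m) (t : NFun k n') x :
  x \in verts (nfun_map b t) -> exists i, x = (sval b (sval t i).1, sval b (sval t i).2).
Proof. by case/vertsP => i ->; exists i; rewrite /= ffunE. Qed.

Lemma le_pair_anti x y : le_pair x y -> le_pair y x -> x = y.
Proof.
case: x y => [x1 x2] [y1 y2]; rewrite /le_pair /= => /andP [h1 h2] /andP [h3 h4].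
by congr pair; apply: val_inj; apply/eqP; rewrite eqn_leq ?h1 ?h2 ?h3 ?h4.
Qed.

(* Listing a chain by increasing [x.1 + x.2] gives a nondegenerate simplex. *)
Lemma chain_enum T : chainb T -> T != set0 ->
  exists n (s : NFun n m), verts s = T /\ injective (sval s).
Proof.
move=> ch ne.
pose leS x y := x.1 + x.2 <= y.1 + y.2.
pose sl := sort leS (enum T).
have ssz : size sl = #|T| by rewrite size_sort cardE.
have memsl x : (x \in sl) = (x \in T) by rewrite mem_sort mem_enum.
have usl : uniq sl by rewrite sort_uniq enum_uniq.
have sosl : sorted leS sl by apply: sort_sorted => x y; apply: leq_total.
pose n := #|T|.-1.
have hn : n.+1 = #|T| by rewrite /n prednK // card_gt0.
pose f := [ffun i : 'I_n.+1 => nth (ord0, ord0) sl i].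
have fT i : f i \in T by rewrite ffunE -memsl mem_nth // ssz -hn.
have fb : nfunb f.
  apply/andP; split; first by apply/forallP => i; apply: chain_diag ch (fT i).
  apply/forallP => i; apply/forallP => j; apply/implyP => ij.
  have hs : leS (f i) (f j).
    have leS_trans : transitive leS by move=> a b c; apply: leq_trans.
    rewrite !ffunE; apply: (sorted_leq_nth leS_trans (fun x => leqnn _) _ sosl) => //.
      by rewrite inE ssz -hn.
    by rewrite inE ssz -hn.
  have := chain_cmp ch (fT i) (fT j); case/orP => // /andP [h1 h2].
  apply/andP; split; move: hs h1 h2; rewrite /leS; move: (f i) (f j) => [a1 a2] [b1 b2] /=; lia.
exists n, (exist (fun s => nfunb s) f fb); split.
- apply/setP => x; apply/vertsP/idP => [[i ->]|xT]; first exact: fT.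
  have /(nthP (ord0, ord0)) [i ilt <-] : x \in sl by rewrite memsl.
  have ilt' : i < n.+1 by rewrite hn -ssz.
  by exists (Ordinal ilt'); rewrite /= ffunE.
- by move=> i j /=; rewrite !ffunE => /eqP; rewrite nth_uniq ?ssz -?hn // => /eqP /val_inj.
Qed.

Lemma index_gt0 n (sg : NFun n m) (j : 'I_n.+1) y : y \in verts sg -> ~~ le_pair (sval sg j) y -> 0 < j.
Proof.
case/vertsP => i ->; apply: contraR; rewrite -eqn0Ngt => /eqP j0.
by apply: nfun_mono; rewrite j0.
Qed.

Lemma index_ltn n (sg : NFun n m) (j : 'I_n.+1) y : y \in verts sg -> ~~ le_pair y (sval sg j) -> j < n.
Proof.
case/vertsP => i ->; apply: contraR; rewrite -leqNgt => jn.
by apply: nfun_mono; rewrite -ltnS (leq_trans (ltn_ord i)) // ltnS.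
Qed.
Section Injective.
Variables (n : nat) (sg : NFun n m).
Hypothesis sinj : injective (sval sg).

Lemma nfun_act_inj k (a b : Dmor k n) : nfun_act a sg = nfun_act b sg -> a = b.
Proof.
move=> e; apply: val_inj; apply/ffunP => i; apply: sinj.
by have := congr1 (fun s : NFun k m => sval s i) e; rewrite /= !ffunE.
Qed.

(* The pullback is monotone by antisymmetry of [le_pair] and injectivity of [sg]. *)
Lemma factor_nfun_act k (t : NFun k m) :
  (exists a : Dmor k n, t = nfun_act a sg) <-> verts t \subset verts sg.
Proof.
split=> [[a ->]|sub]; first exact: verts_act.
have ex i : exists l, sval sg l = sval t i.
  by have /vertsP [l ->] := subsetP sub _ (mem_verts t i); exists l.
pose af := [ffun i => odflt ord0 [pick l | sval sg l == sval t i]].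
have afE i : sval sg (af i) = sval t i.
  rewrite /af ffunE; case: pickP => [l /eqP //|H]; have [l hl] := ex i.
  by have := H l; rewrite hl eqxx.
have am : monob af.
  apply/forallP => i; apply/forallP => i'; apply/implyP => ii'.
  rewrite leqNgt; apply/negP => lt.
  have h1 := nfun_mono t ii'; rewrite -!afE in h1.
  have := sinj (le_pair_anti h1 (nfun_mono sg (ltnW lt))).
  by move=> e; move: lt; rewrite e ltnn.
exists (exist (fun f => monob f) af am); apply: val_inj; apply/ffunP => i.
by rewrite /= ffunE afE.
Qed.

End Injective.
End Vertices.

(** * Extending a lift over N(Fun([1],[m])) *)

Section LowerChains.
Variable m : nat.
Implicit Types (c W : {set Pair m}).

Definition lowers : seq {set Pair m} :=
  sort (fun c c' => key c <= key c') (enum [pred c | lowerb c]).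

Lemma lowers_uniq : uniq lowers.
Proof. by rewrite sort_uniq enum_uniq. Qed.

Lemma mem_lowers c : (c \in lowers) = lowerb c.
Proof. by rewrite mem_sort mem_enum. Qed.

Lemma lowers_sorted i j : i <= j -> j < size lowers ->
  key (nth set0 lowers i) <= key (nth set0 lowers j).
Proof.
move=> ij jl; have key_trans : transitive (fun c c' => key c <= key c').
  by move=> a b c; apply: leq_trans.
apply: (sorted_leq_nth key_trans (fun x => leqnn _) set0) => //; rewrite ?inE //; last by lia.
by apply: sort_sorted => x y; apply: leq_total.
Qed.

Lemma index_lowers_lt c l : lowerb c -> l < size lowers -> key c < key (nth set0 lowers l) ->
  index c lowers < l.
Proof.
move=> Lc ll; apply: contraTT; rewrite -leqNgt => li.
have := lowers_sorted li; rewrite index_mem mem_lowers Lc nth_index ?mem_lowers // => /(_ isT).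
by rewrite leqNgt.
Qed.

Definition filtS l W := baseb W \/ exists i, i < l /\ W \subset add_pivot (nth set0 lowers i).

Lemma filtS_sub l W W' : W \subset W' -> filtS l W' -> filtS l W.
Proof.
move=> sub [h|[i [il h]]]; [left; exact: baseb_sub h|right; exists i].
by split => //; exact: subset_trans sub h.
Qed.

Lemma filtS_all W : chainb W -> W != set0 -> filtS (size lowers) W.
Proof.
move=> ch ne; case: (boolP (baseb W)) => [HA|nA]; first by left.
have MW := not_baseb_interiorb ch ne nA.
have Ld := drop_pivot_lowerb MW.
right; exists (index (drop_pivot W) lowers); rewrite index_mem mem_lowers Ld.
by rewrite nth_index ?mem_lowers //; split => //; apply: sub_add_pivot_drop_pivot.
Qed.

Section Stage.
Variables (l : nat) (n : nat) (sg : NFun n m) (j : 'I_n.+1).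
Hypothesis ll : l < size lowers.
Let c := nth set0 lowers l.
Hypotheses (vsg : verts sg = add_pivot c) (sinj : injective (sval sg)) (sj : sval sg j = pivot c).

Lemma lowerb_stage : lowerb c.
Proof. by rewrite -mem_lowers mem_nth. Qed.

Let Mc : interiorb c := proj1 (andP lowerb_stage).
Let pc : pivot c \notin c := proj2 (andP lowerb_stage).

Lemma mem_add_pivot_stage x : x \in c -> x \in verts sg.
Proof. by rewrite vsg in_setU1 => ->; rewrite orbT. Qed.

Lemma pivot_index_inner : 0 < j < n.
Proof.
have [e eS ee] := snd_min_ex (proj1 (andP (proj2 (andP Mc)))).
have [z [zS zl ze]] := snd_piv_ex_interior Mc.
have lt := snd_min_lt_piv Mc.
apply/andP; split.
- apply: (index_gt0 (mem_add_pivot_stage eS)).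
  by rewrite sj /le_pair pivot2 ee; apply/negP => /andP [_]; lia.
- apply: (index_ltn (mem_add_pivot_stage zS)).
  by rewrite sj /le_pair pivot1; apply/negP => /andP []; lia.
Qed.

(* A simplex of [sg] hitting every vertex but [j] contains [c], which neither
   lies in the base nor is covered by an earlier stage. *)
Lemma filt_stage_hornb k (a : Dmor k n) : filtS l (verts (nfun_act a sg)) -> hornb j a.
Proof.
move=> HF; apply: NNPP => nh.
have cW : c \subset verts (nfun_act a sg).
  apply/subsetP => x xc; have /vertsP [l0 hl0] := mem_add_pivot_stage xc.
  have l0j : l0 != j by apply: contraNneq pc => e; rewrite -sj -e -hl0.
  case: (boolP [exists i, sval a i == l0]) => [/existsP [i /eqP ai]|/existsPn H].
    by apply/vertsP; exists i; rewrite /= ffunE ai.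
  by case: nh; apply/existsP; exists l0; rewrite l0j; apply/forallP.
case: HF => [HA|[i [il sub]]]; first by have := interiorb_sup Mc cW; rewrite HA.
have il' : i < size lowers by apply: ltn_trans il ll.
have ci : c = nth set0 lowers i.
  apply: (lowerb_sub_add_pivot_eq lowerb_stage); last by apply: lowers_sorted => //; apply: ltnW.
    by rewrite -mem_lowers mem_nth.
  exact: subset_trans cW sub.
by move: ci il; rewrite /c => /eqP; rewrite nth_uniq ?lowers_uniq // => /eqP ->; rewrite ltnn.
Qed.

(* A simplex of [sg] missing the vertex [w] of [c] lies in [add_pivot c :\ w],
   whose lower partner comes earlier by [key_drop_pivot_lt]. *)
Lemma hornb_filt_stage k (a : Dmor k n) : hornb j a -> filtS l (verts (nfun_act a sg)).
Proof.
case/existsP => l0 /andP [l0j /forallP ma]; set w := sval sg l0.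
have wp : w != pivot c by apply: contra l0j => /eqP; rewrite -sj => /sinj ->.
have wc : w \in c by move: (mem_verts sg l0); rewrite vsg in_setU1 (negbTE wp).
have WF : verts (nfun_act a sg) \subset add_pivot c :\ w.
  apply/subsetP => x xW; rewrite in_setD1 -vsg (subsetP (verts_act a sg) _ xW) andbT.
  apply: contraTneq xW => ->; apply/vertsP => -[i]; rewrite /= ffunE => /sinj e.
  by have := ma i; rewrite e eqxx.
apply: (filtS_sub WF); case: (boolP (baseb (add_pivot c :\ w))) => [HA|nA]; first by left.
have MF : interiorb (add_pivot c :\ w).
  apply: not_baseb_interiorb nA; first exact: chain_sub (subsetDl _ _) (add_pivot_chain Mc).
  have /set0Pn [x xW] := verts_neq0 (nfun_act a sg).
  by apply/set0Pn; exists x; apply: (subsetP WF).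
have Ld := drop_pivot_lowerb MF.
right; exists (index (drop_pivot (add_pivot c :\ w)) lowers); split.
  exact: index_lowers_lt Ld ll (key_drop_pivot_lt lowerb_stage wc MF).
by rewrite nth_index ?mem_lowers //; apply: sub_add_pivot_drop_pivot.
Qed.

Lemma filt_stage_horn k (a : Dmor k n) :
  filtS l (verts (nfun_act a sg)) <-> hornb j a.
Proof. by split; [apply: filt_stage_hornb | apply: hornb_filt_stage]. Qed.

Lemma filt_stage_succ k (t : NFun k m) :
  filtS l.+1 (verts t) <-> filtS l (verts t) \/ exists a : Dmor k n, t = nfun_act a sg.
Proof.
rewrite factor_nfun_act // vsg; split.
  case=> [HA|[i [il sub]]]; first by left; left.
  case: (ltngtP i l) => [lt|gt|ei]; [by left; right; exists i|lia|by right; rewrite /c -ei].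
case=> [[HA|[i [il sub]]]|sub]; first by left.
  by right; exists i; split => //; lia.
by right; exists l.
Qed.
End Stage.
End LowerChains.

Section CellExtension.
Variables (m : nat) (X' Y' : SSet) (p : SMap X' Y').
Hypothesis Hp : inner_fibration p.
Variables (g : forall k, NFun k m -> X' k) (G : SMap (NFunS m) Y').

Definition base k (t : NFun k m) := baseb (verts t).

Hypothesis g_lift : partial_lift p G base g.

Definition stage l := exists h : forall k, NFun k m -> X' k,
  (forall k (t : NFun k m), base t -> h k t = g t) /\
  partial_lift p G (fun k (t : NFun k m) => filtS l (verts t)) h.

Lemma stage0 : stage 0.
Proof.
exists g; split => //; case: g_lift => gnat gp; split.
- by move=> k k' b t [h|[i [//]]]; exact: gnat.
- by move=> k t [h|[i [//]]]; exact: gp.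
Qed.

Lemma stage_succ l : l < size (lowers m) -> stage l -> stage l.+1.
Proof.
move=> ll [h [hA hlift]]; set c := nth set0 (lowers m) l.
have Mc := proj1 (andP (lowerb_stage ll)).
have neT : add_pivot c != set0 by apply/set0Pn; exists (pivot c); rewrite setU11.
have [n [sg [vsg sinj]]] := chain_enum (add_pivot_chain Mc) neT.
have [j sj] : exists j, sval sg j = pivot c.
  have /vertsP [j ->] : pivot c \in verts sg by rewrite vsg setU11.
  by exists j.
have Fcl : subcomplex (fun k (t : NFunS m k) => filtS l (verts t)).
  by move=> k k' b t; apply: filtS_sub; apply: verts_act.
have [h' [h'h h'lift]] := inner_horn_extension (K := NFunS m) (sig := sg) Hp
  (pivot_index_inner ll vsg sj)
  (nfun_act_inj sinj) Fcl (filt_stage_horn ll vsg sinj sj) hlift.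
exists h'; split; first by move=> k t At; rewrite h'h ?hA //; left.
case: h'lift => h'nat h'p; split.
- by move=> k k' b t /(filt_stage_succ ll vsg sinj) H; apply: h'nat.
- by move=> k t /(filt_stage_succ ll vsg sinj) H; apply: h'p.
Qed.

Lemma cell_extension : exists E : SMap (NFunS m) X',
  (forall k (t : NFun k m), base t -> smap E t = g t) /\
  (forall k (t : NFun k m), smap p (smap E t) = smap G t).
Proof.
have : forall l, l <= size (lowers m) -> stage l.
  by elim=> [_|l IH ll]; [exact: stage0 | apply: stage_succ => //; apply: IH; lia].
move=> /(_ _ (leqnn _)) [h [hA [hnat hp]]].
have filt_all k (t : NFun k m) := filtS_all (verts_chain t) (verts_neq0 t).
have hn k' k (b : Dmor k' k) (t : NFunS m k) : h k' (sact (NFunS m) b t) = sact X' b (h k t).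
  exact: hnat.
by exists (@Build_SMap (NFunS m) X' h hn); split => //= k t; apply: hp.
Qed.
End CellExtension.

(** * Lifting X cell by cell *)

Lemma nfun_mapE k n n' (c : Dmor n n') (s : NFun k n) i :
  sval (nfun_map c s) i = (sval c (sval s i).1, sval c (sval s i).2).
Proof. by rewrite /= ffunE. Qed.

Lemma iotaE1 k (i : 'I_k.+1) : nat_of_ord (sval (iotak k) i).1 = i.
Proof. by rewrite /= ffunE /= inordK //; have := ltn_ord i; lia. Qed.

Lemma iotaE2 k (i : 'I_k.+1) : nat_of_ord (sval (iotak k) i).2 = k.+1 + i.
Proof. by rewrite /= ffunE /= inordK //; have := ltn_ord i; lia. Qed.

Lemma iota_onto k (idx : 'I_(k + k).+2) :
  exists i, idx = (sval (iotak k) i).1 \/ idx = (sval (iotak k) i).2.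
Proof.
have := ltn_ord idx; case: (leqP idx k) => hk hidx.
  by exists (inord idx); left; apply: val_inj; rewrite /= iotaE1 inordK.
by exists (inord (idx - k.+1)); right; apply: val_inj; rewrite /= iotaE2 inordK; lia.
Qed.

Lemma iota_inj k n (f f' : Dmor (k + k).+1 n) :
  nfun_map f (iotak k) = nfun_map f' (iotak k) -> f = f'.
Proof.
move=> e; apply: val_inj; apply/ffunP => idx; have [i [->|->]] := iota_onto idx.
- by have := congr1 (fun s : NFun k n => (sval s i).1) e; rewrite !nfun_mapE.
- by have := congr1 (fun s : NFun k n => (sval s i).2) e; rewrite !nfun_mapE.
Qed.

Definition avoids k n (t : NFun k n) (j : 'I_n.+1) :=
  forall i, ((sval t i).1 != j) && ((sval t i).2 != j).

Lemma nfun_map_avoids k n n' (b : Dmor n' n) (t : NFun k n') (j : 'I_n.+1) :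
  (forall i, sval b i != j) -> avoids (nfun_map b t) j.
Proof. by move=> H i; rewrite nfun_mapE /= !H. Qed.

Lemma avoids_factor k n (t : NFun k n.+1) (j : 'I_n.+2) :
  avoids t j -> t = nfun_map (coface n j) (nfun_map (coface_retr n j) t).
Proof.
move=> H; apply: val_inj; apply/ffunP => i; rewrite !nfun_mapE /=.
have /andP [h1 h2] := H i.
by rewrite !(coface_retrK (ltn_ord j)) //; case: (sval t i).
Qed.

Lemma iota_avoids k n (f : Dmor (k + k).+1 n) (j : 'I_n.+1) :
  avoids (nfun_map f (iotak k)) j -> forall idx, sval f idx != j.
Proof.
move=> H idx; have [i [->|->]] := iota_onto idx.
all: by have /andP := H i; rewrite nfun_mapE => -[].
Qed.

Section BaseSimplices.
Variable m : nat.

Lemma joinb_iota k (f : Dmor (k + k).+1 m) : joinb (verts (nfun_map f (iotak k))).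
Proof.
apply/forall_inP => x /vertsP [i ->]; apply/forall_inP => y /vertsP [j ->].
rewrite !nfun_mapE /=; apply: (monoP (valP f)); rewrite iotaE1 iotaE2.
by have := ltn_ord i; lia.
Qed.

(* The witness lists the first coordinates of [t], then the second ones. *)
Lemma joinb_iotaP k (t : NFun k m) :
  joinb (verts t) -> exists f : Dmor (k + k).+1 m, t = nfun_map f (iotak k).
Proof.
move=> /forall_inP H.
have H' i j : (sval t i).1 <= (sval t j).2.
  by have /forall_inP := H _ (mem_verts t i); apply; apply: mem_verts.
pose f := [ffun idx : 'I_(k + k).+2 => if idx <= k then (sval t (inord idx)).1
                                     else (sval t (inord (idx - k.+1))).2].
have fm : monob f.
  apply/forallP => a; apply/forallP => b; apply/implyP => ab; rewrite !ffunE.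
  have ha := ltn_ord a; have hb := ltn_ord b.
  case: ifP => ak; case: ifP => bk; [| exact: H' | lia |].
  - have hab : (inord a : 'I_k.+1) <= (inord b : 'I_k.+1).
      by rewrite (@inordK k a) ?(@inordK k b); lia.
    by have /andP [] := nfun_mono t hab.
  - have hab : (inord (a - k.+1) : 'I_k.+1) <= (inord (b - k.+1) : 'I_k.+1).
      by rewrite (@inordK k (a - k.+1)) ?(@inordK k (b - k.+1)); lia.
    by have /andP [] := nfun_mono t hab.
exists (exist (fun f => monob f) f fm); apply: val_inj; apply/ffunP => i.
rewrite nfun_mapE; have hi := ltn_ord i.
move: (iotaE1 i) (iotaE2 i); case: (sval (iotak k) i) => a b /= ha hb.
rewrite !ffunE ha hb ifT; last by lia.
rewrite ifF; last by lia.
have -> : (inord i : 'I_k.+1) = i by apply: val_inj; rewrite /= inordK.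
have -> : (inord (k.+1 + i - k.+1) : 'I_k.+1) = i by apply: val_inj; rewrite /= inordK; lia.
by case: (sval t i).
Qed.

Lemma not_coverb_map k n' (b : Dmor n' m) (t : NFun k n') (j : 'I_m.+1) :
  (forall i, sval b i != j) -> ~~ coverb (verts (nfun_map b t)).
Proof.
move=> H; apply/negP => /forallP /(_ j) /exists_inP [x /verts_map [i ->]].
by rewrite /= !(negbTE (H _)).
Qed.

Lemma not_coverb_avoids k (t : NFun k m) : ~~ coverb (verts t) -> exists j, avoids t j.
Proof.
move=> /forallPn [j /exists_inPn H]; exists j => i.
by have := H _ (mem_verts t i); rewrite negb_or.
Qed.

Lemma base_cases k (t : NFun k m) : base t ->
  (exists f : Dmor (k + k).+1 m, t = nfun_map f (iotak k)) \/
  (exists n' (b : Dmor n' m) (t' : NFun k n'), ~ Dsurj b /\ t = nfun_map b t').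
Proof.
case/orP => [/joinb_iotaP H|/not_coverb_avoids [j hj]]; first by left.
right; case: m t j hj => [|n] t j hj.
  by have /andP [] := hj ord0; rewrite (ord1 j) (ord1 (sval t ord0).1).
exists n, (coface n j), (nfun_map (coface_retr n j) t); split; last exact: avoids_factor.
exact: coface_not_Dsurj.
Qed.
End BaseSimplices.

Section LanClasses.
Variable X : SSet.

Definition lan_cls k n (x : X n) (s : NFun k n) : ESd' X k :=
  qclass (LanE NFunCo X k) (existT _ n (x, s)).

Lemma lan_cls_sact k n' n (a : Dmor n' n) (x : X n) (s : NFun k n') :
  lan_cls (sact X a x) s = lan_cls x (nfun_map a s).
Proof.
apply: qclass_eq; first exact: LanE_equiv.
by apply: rst_step; exists n', n, a, x, s.
Qed.

Lemma lan_cls_act k k' n (b : Dmor k' k) (y : X n) (t : NFun k n) :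
  sact (ESd' X) b (lan_cls y t) = lan_cls y (nfun_act b t).
Proof.
rewrite /= /lan_act /lan_cls; apply: qclass_eq; first exact: LanE_equiv.
apply: rst_sym.
by have := lan_shift_E b (qrep_class (LanE_equiv NFunCo X k) (existT _ n (y, t))).
Qed.
End LanClasses.

Section Families.
Variables (X X' Y' : SSet) (p : SMap X' Y').
Variables (u : SMap (ESd X) X') (v : SMap (ESd' X) Y').

(* Only the values at nondegenerate simplices matter. *)
Definition family := forall n, X n -> SMap (NFunS n) X'.

(* The lift at the class of [(x, t)], computed on the nondegenerate part of [x]. *)
Definition fam_eval (F : family) n (x : X n) k (t : NFun k n) : X' k :=
  let: existT r (s, y) := ez x in smap (F r y) (nfun_map s t).

Lemma fam_eval_act (F : family) n (x : X n) k k' (b : Dmor k' k) (t : NFun k n) :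
  fam_eval F x (nfun_act b t) = sact X' b (fam_eval F x t).
Proof.
rewrite /fam_eval; case: (ez x) => r [s y].
by rewrite nfun_map_nat -[nfun_act b _]/(sact (NFunS r) b _) smap_nat.
Qed.

Definition cell_ok (F : family) n (y : X n) (E : SMap (NFunS n) X') :=
  [/\ (forall k (t : NFun k n), smap p (smap E t) = smap v (lan_cls y t)),
      (forall k (f : Dmor (k + k).+1 n),
         smap E (nfun_map f (iotak k)) = smap u (sact X f y : ESd X k))
    & (forall n' (b : Dmor n' n) k (t : NFun k n'), ~ Dsurj b ->
         smap E (nfun_map b t) = fam_eval F (sact X b y) t)].

Definition valid r (F : family) :=
  forall n, n < r -> forall y : X n, nondegenerate y -> cell_ok F y (F n y).

Definition agree r (F F' : family) := forall n, n < r -> forall y : X n, F n y = F' n y.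

Lemma fam_eval_agree r F F' n (x : X n) k (t : NFun k n) :
  agree r F F' -> ezdim x < r -> fam_eval F x t = fam_eval F' x t.
Proof. by rewrite /fam_eval /ezdim; case: (ez x) => m [s y] /= Ha Hm; rewrite Ha. Qed.

Lemma valid_agree r F F' : valid r F -> agree r F F' -> valid r F'.
Proof.
move=> HV Ha n nr y Hy; have [h1 h2 h3] := HV n nr y Hy.
rewrite -Ha //; split => // n' b k t nb; rewrite h3 //.
by apply: fam_eval_agree Ha _; apply: leq_trans (ezdim_not_Dsurj y nb) _; lia.
Qed.

Section Valid.
Variables (r : nat) (F : family).
Hypothesis HV : valid r F.

Lemma fam_eval_sact n (x : X n) n' (a : Dmor n' n) k (t : NFun k n') : ezdim x < r ->
  fam_eval F x (nfun_map a t) = fam_eval F (sact X a x) t.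
Proof.
rewrite /ezdim /fam_eval; have := ez_spec x.
case: (ez x) => m [s y] /= [-> Hs Hy] Hm.
rewrite -sact_comp -nfun_map_comp.
case: (classic (Dsurj (Dcomp s a))) => Hsa; first by rewrite ez_eq.
by have [_ _ ->] := HV Hm Hy.
Qed.

Lemma fam_eval_lift n (x : X n) k (t : NFun k n) : ezdim x < r ->
  smap p (fam_eval F x t) = smap v (lan_cls x t).
Proof.
rewrite /ezdim /fam_eval; have := ez_spec x.
case: (ez x) => m [s y] /= [-> Hs Hy] Hm.
by have [-> _ _] := HV Hm Hy; rewrite lan_cls_sact.
Qed.

Lemma fam_eval_iota n (x : X n) k (f : Dmor (k + k).+1 n) : ezdim x < r ->
  fam_eval F x (nfun_map f (iotak k)) = smap u (sact X f x : ESd X k).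
Proof.
rewrite /ezdim /fam_eval; have := ez_spec x.
case: (ez x) => m [s y] /= [-> Hs Hy] Hm.
by have [_ h2 _] := HV Hm Hy; rewrite -nfun_map_comp h2 sact_comp.
Qed.
End Valid.
End Families.

Section CellStep.
Variables (X X' Y' : SSet) (p : SMap X' Y').
Hypothesis Hp : inner_fibration p.
Variables (u : SMap (ESd X) X') (v : SMap (ESd' X) Y').
Hypothesis Huv : forall k (a : ESd X k), smap p (smap u a) = smap v (smap (can_map X) a).
Variables (r : nat) (F : family X X').
Hypothesis HV : valid p u v r F.

Definition eval_avoiding n (y : X n.+1) (j : 'I_n.+2) k (t : NFun k n.+1) :=
  fam_eval F (sact X (coface n j) y) (nfun_map (coface_retr n j) t).

Lemma fam_eval_avoiding n (y : X n.+1) (j : 'I_n.+2) n' (b : Dmor n' n.+1) k (t : NFun k n') :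
  n < r -> (forall i, sval b i != j) ->
  fam_eval F (sact X b y) t = eval_avoiding y j (nfun_map b t).
Proof.
move=> nr H; rewrite /eval_avoiding [in LHS](coface_factor H) sact_comp.
rewrite -(fam_eval_sact HV) -?nfun_map_comp //.
exact: leq_ltn_trans (ezdim_le _) _.
Qed.

(* Both sides are the value on the double face avoiding [j1] and [j2]. *)
Lemma eval_avoiding_indep n (y : X n.+1) k (t : NFun k n.+1) (j1 j2 : 'I_n.+2) :
  n < r -> avoids t j1 -> avoids t j2 -> eval_avoiding y j1 t = eval_avoiding y j2 t.
Proof.
move=> nr h1 h2; case: (eqVneq j1 j2) => [-> //|ne].
case: n y t j1 j2 nr h1 h2 ne => [|n] y t j1 j2 nr h1 h2 ne.
  exfalso; have /andP [a1 _] := h1 ord0; have /andP [a2 _] := h2 ord0; clear h1 h2.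
  move: ne a1 a2; move: (sval t ord0).1 j1 j2 => x a b.
  by case: x a b => [[|[|?]] ?] [[|[|?]] ?] [[|[|?]] ?].
have [beta [rho [m1 m2 brho]]] := coface2_retr ne.
have -> : t = nfun_map beta (nfun_map rho t).
  apply: val_inj; apply/ffunP => i; rewrite !nfun_mapE /=.
  have /andP [a1 b1] := h1 i; have /andP [a2 b2] := h2 i.
  by rewrite !brho //; case: (sval t i).
by rewrite -(fam_eval_avoiding _ _ nr m1) -(fam_eval_avoiding _ _ nr m2).
Qed.

Lemma fam_eval_boundary n (y : X n) n1 (b1 : Dmor n1 n) n2 (b2 : Dmor n2 n) k
    (t1 : NFun k n1) (t2 : NFun k n2) :
  n <= r -> ~ Dsurj b1 -> ~ Dsurj b2 -> nfun_map b1 t1 = nfun_map b2 t2 ->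
  fam_eval F (sact X b1 y) t1 = fam_eval F (sact X b2 y) t2.
Proof.
case: n y b1 b2 => [|n] y b1 b2 nr s1 s2 e; first by case: s1; apply: Dsurj_to0.
have [j1 hj1] := not_Dsurj_miss s1; have [j2 hj2] := not_Dsurj_miss s2.
rewrite (fam_eval_avoiding _ _ nr hj1) (fam_eval_avoiding _ _ nr hj2) e.
by apply: eval_avoiding_indep => //; [rewrite -e|]; apply: nfun_map_avoids.
Qed.

Lemma fam_eval_boundary_iota n (y : X n) k (f : Dmor (k + k).+1 n) n' (b : Dmor n' n)
    (t' : NFun k n') :
  n <= r -> ~ Dsurj b -> nfun_map f (iotak k) = nfun_map b t' ->
  smap u (sact X f y : ESd X k) = fam_eval F (sact X b y) t'.
Proof.
case: n y f b => [|n] y f b nr sb e; first by case: sb; apply: Dsurj_to0.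
have [j hj] := not_Dsurj_miss sb.
have fj : forall idx, sval f idx != j by apply: iota_avoids; rewrite e; apply: nfun_map_avoids.
rewrite (fam_eval_avoiding _ _ nr hj) -e /eval_avoiding -nfun_map_comp.
rewrite (fam_eval_iota HV); last exact: leq_ltn_trans (ezdim_le _) _.
by rewrite -sact_comp -coface_factor.
Qed.

Section Cell.
Variables (n : nat) (y : X n).
Hypothesis nr : n <= r.

(* On the base, the lift is forced: [u] on ESd Δ^n, the lower cells on the
   boundary; elsewhere the value is junk. *)
Definition cell_base k (t : NFun k n) : X' k :=
  if excluded_middle_informative (exists f : Dmor (k + k).+1 n, t = nfun_map f (iotak k))
    is left H
  then smap u (sact X (proj1_sig (constructive_indefinite_description _ H)) y : ESd X k)
  else if excluded_middle_informative (exists q : {n' : nat & (Dmor n' n * NFun k n')%type},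
          ~ Dsurj (projT2 q).1 /\ t = nfun_map (projT2 q).1 (projT2 q).2) is left H
  then let q := proj1_sig (constructive_indefinite_description _ H) in
       fam_eval F (sact X (projT2 q).1 y) (projT2 q).2
  else smap u (sact X (Dconst (k + k).+1 n) y : ESd X k).

Lemma cell_base_iota k (f : Dmor (k + k).+1 n) :
  cell_base (nfun_map f (iotak k)) = smap u (sact X f y : ESd X k).
Proof.
rewrite /cell_base; case: excluded_middle_informative => [H|[]]; last by exists f.
by case: (constructive_indefinite_description _ H) => f' /= /iota_inj ->.
Qed.

Lemma cell_base_boundary k n' (b : Dmor n' n) (t' : NFun k n') : ~ Dsurj b ->
  cell_base (nfun_map b t') = fam_eval F (sact X b y) t'.
Proof.
move=> sb; rewrite /cell_base; case: excluded_middle_informative => [H|_].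
  case: (constructive_indefinite_description _ H) => f' /= e.
  exact: fam_eval_boundary_iota (esym e).
case: excluded_middle_informative => [H|[]]; last by exists (existT _ n' (b, t')).
case: (constructive_indefinite_description _ H) => [[n2 [b2 t2]]] /= [s2 e2].
exact: fam_eval_boundary (esym e2).
Qed.

Lemma cell_image_nat k' k (b : Dmor k' k) (t : NFunS n k) :
  smap v (lan_cls y (sact (NFunS n) b t)) = sact Y' b (smap v (lan_cls y t)).
Proof. by rewrite -smap_nat lan_cls_act. Qed.

Definition cell_image : SMap (NFunS n) Y' :=
  {| smap := fun k (t : NFunS n k) => smap v (lan_cls y t); smap_nat := cell_image_nat |}.

Lemma cell_base_lift : partial_lift p cell_image (@base n) cell_base.
Proof.
split.
- move=> k k' b t /base_cases [[f ->]|[n' [b' [t' [sb ->]]]]].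
    rewrite /= -nfun_map_nat iota_nat -nfun_map_comp !cell_base_iota.
    by rewrite -[sact X' b _]smap_nat /= sact_comp.
  by rewrite /= -nfun_map_nat !cell_base_boundary // fam_eval_act.
- move=> k t /base_cases [[f ->]|[n' [b' [t' [sb ->]]]]].
    by rewrite cell_base_iota Huv /= -lan_cls_sact.
  rewrite cell_base_boundary // (fam_eval_lift HV) /= ?lan_cls_sact //.
  exact: leq_trans (ezdim_not_Dsurj y sb) _.
Qed.

Lemma cell_ok_exists : exists E, cell_ok p u v F y E.
Proof.
have [E [E1 E2]] := cell_extension Hp cell_base_lift.
exists E; split => [k t|k f|n' b k t sb]; first by rewrite E2.
- by rewrite E1 ?cell_base_iota //; apply/orP; left; apply: joinb_iota.
- rewrite E1 ?cell_base_boundary //; apply/orP; right.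
  by have [j hj] := not_Dsurj_miss sb; apply: not_coverb_map hj.
Qed.
End Cell.
End CellStep.

(** * Assembling the lift *)

Section Assembly.
Variables (X X' Y' : SSet) (p : SMap X' Y').
Hypothesis Hp : inner_fibration p.
Variables (u : SMap (ESd X) X') (v : SMap (ESd' X) Y').
Hypothesis Huv : forall k (a : ESd X k), smap p (smap u a) = smap v (smap (can_map X) a).

Lemma valid_succ r (F : family X X') : valid p u v r F ->
  exists F' : family X X', valid p u v r.+1 F' /\ agree r F F'.
Proof.
move=> HV.
pose F' : family X X' := fun n y =>
  if excluded_middle_informative (exists E : SMap (NFunS n) X', n = r /\ cell_ok p u v F y E)
    is left H then proj1_sig (constructive_indefinite_description _ H) else F n y.
have Ag : agree r F F'.
  move=> n nr y; rewrite /F'; case: excluded_middle_informative => // H.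
  by exfalso; case: (constructive_indefinite_description _ H) => E [e _]; lia.
exists F'; split => // n nr y Hy.
case: (ltngtP n r) => [lt|gt|e]; [exact: (valid_agree HV Ag) lt y Hy | lia |].
rewrite /F'; case: excluded_middle_informative => [H|[]]; last first.
  by have [E HE] := cell_ok_exists Hp Huv HV y (eq_leq e); exists E.
case: (constructive_indefinite_description _ H) => E /= [_ [h1 h2 h3]].
split => // n' b k t nb; rewrite h3 //; apply: fam_eval_agree Ag _.
by rewrite -e; apply: ezdim_not_Dsurj.
Qed.

Lemma fam_const_nat n (y : X n) k' k (b : Dmor k' k) (t : NFunS n k) :
  smap u (sact X (Dconst (k' + k').+1 n) y : ESd X k') =
  sact X' b (smap u (sact X (Dconst (k + k).+1 n) y : ESd X k)).
Proof. by rewrite -smap_nat /= -sact_comp Dcomp_const. Qed.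

(* Any family is valid below 0; this one only serves to start the recursion. *)
Definition fam_const : family X X' := fun n y =>
  {| smap := fun k _ => smap u (sact X (Dconst (k + k).+1 n) y : ESd X k);
     smap_nat := fam_const_nat y |}.

Fixpoint fam_seq (r : nat) : {F : family X X' | valid p u v r F} :=
  if r is r'.+1 then
    let c := constructive_indefinite_description _ (valid_succ (proj2_sig (fam_seq r'))) in
    exist _ (proj1_sig c) (proj1 (proj2_sig c))
  else exist _ fam_const (fun n (nr : n < 0) => False_ind _ (notF nr)).

Lemma fam_seq_succ r : agree r (sval (fam_seq r)) (sval (fam_seq r.+1)).
Proof. by rewrite /=; set c := constructive_indefinite_description _ _; case: (proj2_sig c). Qed.

Lemma fam_seq_agree r r' : r <= r' -> agree r (sval (fam_seq r)) (sval (fam_seq r')).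
Proof.
elim: r' => [|r' IH] le; first by have -> : r = 0 by lia.
case: (ltngtP r r'.+1) => [lt|gt|->]; [|lia|by []].
move=> n nr y; rewrite (IH _ n nr y); last by lia.
by apply: fam_seq_succ; lia.
Qed.

Definition fam_lim : family X X' := fun n y => sval (fam_seq n.+1) n y.

Lemma fam_lim_valid r : valid p u v r fam_lim.
Proof.
apply: (valid_agree (proj2_sig (fam_seq r))) => n nr y.
by rewrite /fam_lim (@fam_seq_agree n.+1 r).
Qed.

Definition lift_rep k (w : LanT NFunCo X k) : X' k := fam_eval fam_lim (projT2 w).1 (projT2 w).2.

Lemma lift_rep_E k (w w' : LanT NFunCo X k) : LanE NFunCo X k w w' -> lift_rep w = lift_rep w'.
Proof.
elim=> [t1 t2 [n [m [a [x [s [-> ->]]]]]] | t1 | t1 t2 _ IH | t1 t2 t3 _ IH1 _ IH2] //.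
- by rewrite /lift_rep /= (fam_eval_sact (@fam_lim_valid (ezdim x).+1)).
- by rewrite IH1 IH2.
Qed.

Definition lift_fun k (q : ESd' X k) : X' k := lift_rep (qrep q).

Lemma lift_fun_cls k (w : LanT NFunCo X k) : lift_fun (qclass (LanE NFunCo X k) w) = lift_rep w.
Proof. exact/esym/lift_rep_E/(qrep_class (LanE_equiv NFunCo X k)). Qed.

Lemma lift_fun_nat k' k (b : Dmor k' k) (q : ESd' X k) :
  lift_fun (sact (ESd' X) b q) = sact X' b (lift_fun q).
Proof.
rewrite /= /lan_act lift_fun_cls /lift_fun.
by case: (qrep q) => n [x s]; rewrite /lift_rep /lan_shift /= fam_eval_act.
Qed.

Definition lift_map : SMap (ESd' X) X' := Build_SMap lift_fun_nat.

Lemma lift_map_can k (a : ESd X k) : smap lift_map (smap (can_map X) a) = smap u a.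
Proof.
rewrite /= /can_fun lift_fun_cls /lift_rep /= -[iotak k]nfun_map_id.
have lt := ltnSn (@ezdim X (k + k).+1 a).
by rewrite (fam_eval_iota (@fam_lim_valid (@ezdim X (k + k).+1 a).+1) _ lt) sact_id.
Qed.

Lemma lift_map_lift k (q : ESd' X k) : smap p (smap lift_map q) = smap v q.
Proof.
rewrite /= /lift_fun -{2}(qclass_rep q); case: (qrep q) => n [x s].
by rewrite /lift_rep /= (fam_eval_lift (@fam_lim_valid (ezdim x).+1)).
Qed.
End Assembly.

Theorem proposition8p23 : forall X : SSet, inner_anodyne (can_map X).
Proof.
move=> X X' Y' p Hp u v Huv.
by exists (lift_map Hp Huv); split; [apply: lift_map_can | apply: lift_map_lift].
Qed.
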